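(* Suppose $T\in L_{aut}(\mathcal B)$ has the shadowing property. Then the following are equivalent: (1) $T$ is uniformly expansive; (2) $T$ is expansive; (3) $T$ has the unique shadowing property; (4) $T$ is hyperbolic.
   Context: $\mathcal B$ is a Banach space, $S_{\mathcal B}$ its unit sphere. A sequence $(x_n)_{n\in\mathbb Z}$ is a $\delta$-pseudo-orbit if $|x_{n+1}-Tx_n|<\delta$ for all $n$; $y$ $\varepsilon$-shadows it if $|x_n-T^ny|<\varepsilon$ for all $n$. Shadowing property: for every $\varepsilon>0$ there is $\delta>0$ such that every $\delta$-pseudo-orbit is $\varepsilon$-shadowed by some point. Unique shadowing property: there exist $\varepsilon_0,\delta_0>0$ such that for every $0<\varepsilon\le\varepsilon_0$ there is $0<\delta\le\delta_0$ such that every $\delta$-pseudo-orbit is $\varepsilon$-shadowed by exactly one point. $T$ is expansive if there is $c>0$ such that $|T^nx-T^ny|\le c$ for all $n\in\mathbb Z$ implies $x=y$. $T$ is uniformly expansive if there is $n>0$ such that for every $x\in S_{\mathcal B}$ either $|T^nx|\ge2$ or $|T^{-n}x|\ge2$. $T$ is hyperbolic if its spectrum does not meet the unit circle. *)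

From Stdlib Require Import Reals ZArith.
Open Scope R_scope.

Record Cx : Type := mkCx { Cre : R; Cim : R }.
Definition Cadd (a b : Cx) : Cx := mkCx (Cre a + Cre b) (Cim a + Cim b).
Definition Cmul (a b : Cx) : Cx :=
  mkCx (Cre a * Cre b - Cim a * Cim b) (Cre a * Cim b + Cim a * Cre b).
Definition C1 : Cx := mkCx 1 0.
Definition Cmod (a : Cx) : R := sqrt (Cre a ^ 2 + Cim a ^ 2).

Record Banach : Type := MkBanach {
  carrier :> Type;
  vzero : carrier;
  vadd : carrier -> carrier -> carrier;
  vopp : carrier -> carrier;
  vscal : Cx -> carrier -> carrier;
  vnorm : carrier -> R;
  vadd_assoc : forall x y z, vadd x (vadd y z) = vadd (vadd x y) z;
  vadd_comm : forall x y, vadd x y = vadd y x;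
  vadd_0 : forall x, vadd x vzero = x;
  vadd_opp : forall x, vadd x (vopp x) = vzero;
  vscal_assoc : forall a b x, vscal a (vscal b x) = vscal (Cmul a b) x;
  vscal_1 : forall x, vscal C1 x = x;
  vscal_distr_v : forall a x y, vscal a (vadd x y) = vadd (vscal a x) (vscal a y);
  vscal_distr_c : forall a b x, vscal (Cadd a b) x = vadd (vscal a x) (vscal b x);
  vnorm_eq0 : forall x, vnorm x = 0 -> x = vzero;
  vnorm_triangle : forall x y, vnorm (vadd x y) <= vnorm x + vnorm y;
  vnorm_scal : forall a x, vnorm (vscal a x) = Cmod a * vnorm x;
  vcomplete : forall u : nat -> carrier,
    (forall eps, 0 < eps -> exists N, forall m n, (N <= m)%nat -> (N <= n)%nat ->
        vnorm (vadd (u m) (vopp (u n))) < eps) ->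
    exists l, forall eps, 0 < eps -> exists N, forall n, (N <= n)%nat ->
        vnorm (vadd (u n) (vopp l)) < eps
}.

Arguments vzero {b0}. Arguments vadd {b0}. Arguments vopp {b0}.
Arguments vscal {b0}. Arguments vnorm {b0}.

Definition dist {B : Banach} (x y : B) : R := vnorm (vadd x (vopp y)).

Definition bounded_linear {B : Banach} (T : B -> B) : Prop :=
  (forall x y, T (vadd x y) = vadd (T x) (T y)) /\
  (forall a x, T (vscal a x) = vscal a (T x)) /\
  (exists M, forall x, vnorm (T x) <= M * vnorm x).

Definition is_aut_with_inverse {B : Banach} (T S : B -> B) : Prop :=
  bounded_linear T /\ bounded_linear S /\
  (forall x, S (T x) = x) /\ (forall x, T (S x) = x).

Definition zpow {B : Banach} (T S : B -> B) (n : Z) (x : B) : B :=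
  match n with
  | Z0 => x
  | Zpos p => Nat.iter (Pos.to_nat p) T x
  | Zneg p => Nat.iter (Pos.to_nat p) S x
  end.

Definition pseudo_orbit {B : Banach} (T : B -> B) (delta : R) (xs : Z -> B) : Prop :=
  forall n : Z, dist (xs (n + 1)%Z) (T (xs n)) < delta.

Definition eps_shadows {B : Banach} (T S : B -> B) (eps : R) (xs : Z -> B) (y : B) : Prop :=
  forall n : Z, dist (xs n) (zpow T S n y) < eps.

Definition shadowing {B : Banach} (T S : B -> B) : Prop :=
  forall eps, 0 < eps -> exists delta, 0 < delta /\
    forall xs, pseudo_orbit T delta xs -> exists y, eps_shadows T S eps xs y.

Definition unique_shadowing {B : Banach} (T S : B -> B) : Prop :=
  exists eps0 delta0, 0 < eps0 /\ 0 < delta0 /\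
    forall eps, 0 < eps -> eps <= eps0 ->
      exists delta, 0 < delta /\ delta <= delta0 /\
        forall xs, pseudo_orbit T delta xs ->
          exists y, eps_shadows T S eps xs y /\
            forall y', eps_shadows T S eps xs y' -> y' = y.

Definition expansive {B : Banach} (T S : B -> B) : Prop :=
  exists c, 0 < c /\ forall x y : B,
    (forall n : Z, dist (zpow T S n x) (zpow T S n y) <= c) -> x = y.

Definition uniformly_expansive {B : Banach} (T S : B -> B) : Prop :=
  exists n : nat, (0 < n)%nat /\ forall x : B, vnorm x = 1 ->
    2 <= vnorm (zpow T S (Z.of_nat n) x) \/ 2 <= vnorm (zpow T S (- Z.of_nat n) x).

Definition in_spectrum {B : Banach} (T : B -> B) (lam : Cx) : Prop :=
  let U := fun x : B => vadd (T x) (vopp (vscal lam x)) in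
  ~ exists Rv : B -> B, bounded_linear Rv /\
      (forall x, Rv (U x) = x) /\ (forall x, U (Rv x) = x).

Definition hyperbolic {B : Banach} (T : B -> B) : Prop :=
  forall lam : Cx, Cmod lam = 1 -> ~ in_spectrum T lam.

(** The whole argument runs through the defect operator on
  two-sided sequences, (D u)_k = u_(k+1) - T u_k, whose kernel consists of
  the orbits of T and whose small values are the pseudo-orbits:
  - shadowing makes D onto the bounded sequences, with a linear bound;
  - for linear T, expansivity means that 0 is the only point with a bounded
    orbit; then D is injective on bounded sequences, and together with
    shadowing its inverse is bounded there;
  - expansivity <-> unique shadowing follows directly from the definitions;
  - uniform expansivity implies expansivity by a doubling argument, and the
    converse follows by applying the bound on D^-1 to orbit segments damped
    by a tent function;
  - solving D u = (lambda^k y)_k gives the resolvent of T at every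
    unimodular lambda, so expansivity implies hyperbolicity;
  - conversely, for hyperbolic T the resolvent is uniformly bounded and
    Lipschitz on the unit circle; a discrete Fourier analysis of a damped
    bounded orbit then shows that the orbit is trivial. *)

From Pilot Require Import Defs.
From Stdlib Require Import Reals ZArith Lra Lia Psatz Classical ClassicalEpsilon.
Open Scope R_scope.

Lemma Cx_eq (a b : Cx) : Cre a = Cre b -> Cim a = Cim b -> a = b.
Proof. destruct a, b; simpl; intros; subst; reflexivity. Qed.

Definition C0 : Cx := mkCx 0 0.
Definition Cneg (a : Cx) : Cx := mkCx (- Cre a) (- Cim a).
Definition Csub (a b : Cx) : Cx := Cadd a (Cneg b).
Definition Cconj (a : Cx) : Cx := mkCx (Cre a) (- Cim a).
Definition RC (r : R) : Cx := mkCx r 0.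
Definition cis (t : R) : Cx := mkCx (cos t) (sin t).

Lemma Cmod_nonneg a : 0 <= Cmod a.
Proof. apply sqrt_pos. Qed.

Lemma Cmod_RC r : Cmod (RC r) = Rabs r.
Proof. unfold Cmod, RC; simpl. rewrite <- sqrt_Rsqr_abs. f_equal. unfold Rsqr; ring. Qed.

Lemma Cmod_Cneg a : Cmod (Cneg a) = Cmod a.
Proof. unfold Cmod, Cneg; simpl. f_equal; ring. Qed.

Lemma Cmod_conj a : Cmod (Cconj a) = Cmod a.
Proof. unfold Cmod, Cconj; simpl. f_equal; ring. Qed.

Lemma Cmod_C1 : Cmod Defs.C1 = 1.
Proof. unfold Cmod, Defs.C1; simpl. replace (_ + _) with 1 by ring. apply sqrt_1. Qed.

Lemma Cmod_cis t : Cmod (cis t) = 1.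
Proof.
  unfold Cmod, cis; simpl. replace (_ + _) with 1. apply sqrt_1.
  pose proof (sin2_cos2 t) as H; unfold Rsqr in H; nra.
Qed.

Lemma Cmul_comm a b : Cmul a b = Cmul b a.
Proof. unfold Cmul; apply Cx_eq; simpl; ring. Qed.

Lemma RC_mul r s : Cmul (RC r) (RC s) = RC (r * s).
Proof. unfold Cmul, RC; apply Cx_eq; simpl; ring. Qed.

Lemma Cmul_cis a b : Cmul (cis a) (cis b) = cis (a + b).
Proof. unfold Cmul, cis; apply Cx_eq; simpl. rewrite cos_plus; ring. rewrite sin_plus; ring. Qed.

Lemma cis_0 : cis 0 = Defs.C1.
Proof. unfold cis; apply Cx_eq; simpl. apply cos_0. apply sin_0. Qed.

Lemma cis_period (t : R) (k : Z) : cis (t + 2 * IZR k * PI) = cis t.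
Proof.
  assert (Hnat : forall t (n : nat), cis (t + 2 * INR n * PI) = cis t).
  { intros s n. unfold cis. rewrite cos_period, sin_period. reflexivity. }
  destruct (Z_le_gt_dec 0 k) as [H|H].
  - rewrite <- (Z2Nat.id k), <- INR_IZR_INZ by lia. apply Hnat.
  - set (m := Z.to_nat (- k)).
    assert (IZR k = - INR m) as E.
    { unfold m. rewrite INR_IZR_INZ, Z2Nat.id, opp_IZR by lia. ring. }
    rewrite E, <- (Hnat (t + 2 * - INR m * PI) m). f_equal. ring.
Qed.

Lemma Cconj_mul l : Cmod l = 1 -> Cmul (Cconj l) l = Defs.C1.
Proof.
  intros H. unfold Cmod in H.
  assert (Hsq : Cre l * Cre l + Cim l * Cim l = 1).
  { pose proof (Rsqr_sqrt (Cre l ^ 2 + Cim l ^ 2) ltac:(nra)) as E.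
    rewrite H in E. unfold Rsqr in E. nra. }
  unfold Cmul, Cconj, Defs.C1; apply Cx_eq; simpl; nra.
Qed.

Lemma Rabs_sin_le x : Rabs (sin x) <= Rabs x.
Proof.
  assert (Hpos : forall y, 0 <= y -> Rabs (sin y) <= y).
  { intros y H. destruct (Req_dec y 0) as [->|Hn]. rewrite sin_0, Rabs_R0; lra.
    pose proof (sin_lt_x y ltac:(lra)). pose proof (SIN_bound y). pose proof PI2_3_2.
    destruct (Rle_dec y 1).
    - pose proof (sin_ge_0 y H ltac:(lra)). rewrite Rabs_right; lra.
    - apply Rabs_le; lra. }
  destruct (Rle_dec 0 x).
  - rewrite (Rabs_right x) by lra. apply Hpos; lra.
  - pose proof (Hpos (-x) ltac:(lra)) as H.
    rewrite sin_neg, Rabs_Ropp in H. rewrite (Rabs_left x) by lra. exact H.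
Qed.

Lemma Cmod_sub_cis_sq a b : (Cmod (Csub (cis a) (cis b)))² = 4 * (sin ((a - b)/2))².
Proof.
  unfold Cmod. rewrite Rsqr_sqrt by (apply Rplus_le_le_0_compat; apply pow2_ge_0).
  unfold Csub, Cadd, Cneg, cis; simpl.
  assert (cos (a - b) = 1 - 2 * sin ((a-b)/2) * sin ((a-b)/2)).
  { rewrite <- cos_2a_sin. f_equal. field. }
  rewrite cos_minus in H. unfold Rsqr.
  pose proof (sin2_cos2 a). pose proof (sin2_cos2 b). unfold Rsqr in *. nra.
Qed.

Lemma cis_chord a b : Cmod (Csub (cis a) (cis b)) <= Rabs (a - b).
Proof.
  apply Rsqr_incr_0_var; [|apply Rabs_pos].
  rewrite Cmod_sub_cis_sq. pose proof (Rabs_sin_le ((a-b)/2)) as H.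
  rewrite (Rsqr_abs (sin _)).
  replace (Rabs ((a - b)/2)) with (Rabs (a-b) / 2) in H.
  2:{ unfold Rdiv. rewrite Rabs_mult, (Rabs_right (/2)) by lra. reflexivity. }
  pose proof (Rabs_pos (sin ((a-b)/2))). unfold Rsqr. nra.
Qed.

Lemma cis_chord_lower y : Rabs y <= PI -> Rabs y / 3 <= Cmod (Csub Defs.C1 (cis y)).
Proof.
  intros Hy. rewrite <- cis_0.
  apply Rsqr_incr_0_var; [|apply Cmod_nonneg].
  rewrite Cmod_sub_cis_sq.
  replace ((0 - y)/2) with (- (y/2)) by field. rewrite sin_neg, <- Rsqr_neg.
  assert (L : forall t, 0 <= t -> t <= PI/2 -> t / 3 <= sin t).
  { intros t H0 H1. pose proof (sin_bound t 0 H0 ltac:(lra)) as [H2 _].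
    pose proof PI_4.
    simpl in H2. unfold sin_approx, sin_term in H2. simpl in H2.
    assert (t <= 2) by lra. nra. }
  pose proof PI2_3_2.
  destruct (Rle_dec 0 y).
  - rewrite Rabs_right in Hy |- * by lra.
    pose proof (L (y/2) ltac:(lra) ltac:(lra)). unfold Rsqr. nra.
  - rewrite Rabs_left in Hy |- * by lra.
    pose proof (L (-y/2) ltac:(lra) ltac:(lra)).
    replace (y/2) with (- (-y/2)) by field. rewrite sin_neg, <- Rsqr_neg. unfold Rsqr. nra.
Qed.

Notation "x +v y" := (vadd x y) (at level 50, left associativity).
Notation "-v x" := (vopp x) (at level 35, right associativity).
Notation "a *v x" := (vscal a x) (at level 40, no associativity).
Definition vsub {B : Banach} (x y : B) : B := x +v -v y.
Notation "x -v y" := (vsub x y) (at level 50, left associativity).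

Arguments vadd_assoc {b0} x y z. Arguments vadd_comm {b0} x y. Arguments vadd_0 {b0} x.
Arguments vadd_opp {b0} x. Arguments vscal_assoc {b0} a b x. Arguments vscal_1 {b0} x.
Arguments vscal_distr_v {b0} a x y. Arguments vscal_distr_c {b0} a b x.
Arguments vnorm_eq0 {b0} x. Arguments vnorm_triangle {b0} x y. Arguments vnorm_scal {b0} a x.

Section VectorAlgebra.
Context {B : Banach}.
Implicit Types (x y z : B) (a b : Cx).

Lemma dist_vsub x y : Defs.dist x y = vnorm (x -v y).
Proof. reflexivity. Qed.

Lemma vadd_0l x : vzero +v x = x.
Proof. rewrite vadd_comm. apply vadd_0. Qed.

Lemma vopp_l x : -v x +v x = vzero.
Proof. rewrite vadd_comm. apply vadd_opp. Qed.

Lemma vadd_cancel_l x y z : x +v y = x +v z -> y = z.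
Proof.
  intros H. rewrite <- (vadd_0l y), <- (vadd_0l z), <- (vopp_l x), <- !vadd_assoc, H.
  reflexivity.
Qed.

Lemma vopp_unique x y : x +v y = vzero -> y = -v x.
Proof. intros H. apply (vadd_cancel_l x). rewrite H, vadd_opp. reflexivity. Qed.

Lemma vopp_opp x : -v -v x = x.
Proof. symmetry. apply vopp_unique. apply vopp_l. Qed.

Lemma vopp_0 : -v (vzero : B) = vzero.
Proof. symmetry. apply vopp_unique. apply vadd_0. Qed.

Lemma vopp_add x y : -v (x +v y) = -v x +v -v y.
Proof.
  symmetry. apply vopp_unique.
  rewrite (vadd_comm (-v x)), vadd_assoc, <- (vadd_assoc x y), vadd_opp, vadd_0, vadd_opp.
  reflexivity.
Qed.

Lemma vsub_diag x : x -v x = vzero.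
Proof. apply vadd_opp. Qed.

Lemma vsub_eq0 x y : x -v y = vzero -> x = y.
Proof.
  intros H. apply vopp_unique in H. rewrite <- (vopp_opp y), H, vopp_opp. reflexivity.
Qed.

Lemma vsub_add x y : x -v y +v y = x.
Proof. unfold vsub. rewrite <- vadd_assoc, vopp_l, vadd_0. reflexivity. Qed.

Lemma vsub_0r x : x -v vzero = x.
Proof. unfold vsub. rewrite vopp_0. apply vadd_0. Qed.

Lemma vsub_0l x : vzero -v x = -v x.
Proof. apply vadd_0l. Qed.

Lemma vopp_sub x y : -v (x -v y) = y -v x.
Proof. unfold vsub. rewrite vopp_add, vopp_opp, vadd_comm. reflexivity. Qed.

Lemma vsub_sub_l x y : x -v y -v x = -v y.
Proof. unfold vsub. rewrite vadd_comm, vadd_assoc, vopp_l, vadd_0l. reflexivity. Qed.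

Lemma vsub_move x y z : x -v y = z -> y = x -v z.
Proof. intros <-. unfold vsub. rewrite vopp_add, vopp_opp, vadd_assoc, vadd_opp, vadd_0l. reflexivity. Qed.

Lemma vadd_swap x y x' y' : (x +v y) +v (x' +v y') = (x +v x') +v (y +v y').
Proof. rewrite !vadd_assoc. f_equal. rewrite <- !vadd_assoc. f_equal. apply vadd_comm. Qed.

Lemma vsub_add_distr x y x' y' : (x +v y) -v (x' +v y') = (x -v x') +v (y -v y').
Proof. unfold vsub. rewrite vopp_add. apply vadd_swap. Qed.

Lemma vsub_sub_distr x y x' y' : (x -v y) -v (x' -v y') = (x -v x') -v (y -v y').
Proof. unfold vsub. rewrite !vopp_add, !vopp_opp. apply vadd_swap. Qed.

Lemma vscal_C0 x : C0 *v x = vzero.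
Proof.
  apply (vadd_cancel_l (C0 *v x)). rewrite vadd_0, <- vscal_distr_c. f_equal.
  apply Cx_eq; simpl; ring.
Qed.

Lemma vscal_0 a : a *v (vzero : B) = vzero.
Proof.
  apply (vadd_cancel_l (a *v vzero)). rewrite vadd_0, <- vscal_distr_v, vadd_0. reflexivity.
Qed.

Lemma vscal_Cneg a x : Cneg a *v x = -v (a *v x).
Proof.
  apply vopp_unique. rewrite <- vscal_distr_c, <- (vscal_C0 x). f_equal.
  apply Cx_eq; simpl; ring.
Qed.

Lemma vopp_scal x : -v x = Cneg Defs.C1 *v x.
Proof. rewrite vscal_Cneg, vscal_1. reflexivity. Qed.

Lemma vscal_opp a x : a *v (-v x) = -v (a *v x).
Proof. apply vopp_unique. rewrite <- vscal_distr_v, vadd_opp. apply vscal_0. Qed.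

Lemma vscal_sub a x y : a *v (x -v y) = a *v x -v a *v y.
Proof. unfold vsub. rewrite vscal_distr_v, vscal_opp. reflexivity. Qed.

Lemma vscal_Csub a b x : Csub a b *v x = a *v x -v b *v x.
Proof. unfold Csub, vsub. rewrite vscal_distr_c, vscal_Cneg. reflexivity. Qed.

Lemma vscal_RC_sub (r s : R) x : RC r *v x -v RC s *v x = RC (r - s) *v x.
Proof. rewrite <- vscal_Csub. f_equal. apply Cx_eq; simpl; ring. Qed.

Lemma vscal_comm a b x : a *v (b *v x) = b *v (a *v x).
Proof. rewrite !vscal_assoc, Cmul_comm. reflexivity. Qed.

Lemma vscal_RC_inv (r : R) x : r <> 0 -> RC (/ r) *v (RC r *v x) = x.
Proof. intros H. rewrite vscal_assoc, RC_mul, Rinv_l by auto. apply vscal_1. Qed.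

Lemma vnorm_0 : vnorm (vzero : B) = 0.
Proof.
  rewrite <- (vscal_C0 (vzero : B)), vnorm_scal. unfold Cmod, C0; simpl.
  replace (0 * (0 * 1) + 0 * (0 * 1)) with 0 by ring. rewrite sqrt_0. ring.
Qed.

Lemma vnorm_opp x : vnorm (-v x) = vnorm x.
Proof. rewrite vopp_scal, vnorm_scal, Cmod_Cneg, Cmod_C1. ring. Qed.

Lemma vnorm_nonneg x : 0 <= vnorm x.
Proof.
  pose proof (vnorm_triangle x (-v x)) as H. rewrite vadd_opp, vnorm_0, vnorm_opp in H. lra.
Qed.

Lemma vnorm_sub_sym x y : vnorm (x -v y) = vnorm (y -v x).
Proof. rewrite <- vopp_sub, vnorm_opp. reflexivity. Qed.

Lemma vnorm_sub_le x y : vnorm (x -v y) <= vnorm x + vnorm y.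
Proof. unfold vsub. rewrite <- (vnorm_opp y). apply vnorm_triangle. Qed.

Lemma vnorm_rev x y : vnorm x - vnorm y <= vnorm (x -v y).
Proof. pose proof (vnorm_triangle (x -v y) y) as H. rewrite vsub_add in H. lra. Qed.

Lemma vnorm_tri3 x y z : vnorm (x -v z) <= vnorm (x -v y) + vnorm (y -v z).
Proof.
  replace (x -v z) with ((x -v y) +v (y -v z)). apply vnorm_triangle.
  unfold vsub. rewrite <- vadd_assoc, (vadd_assoc (-v y)), vopp_l, vadd_0l. reflexivity.
Qed.

Lemma vnorm_RC (r : R) x : vnorm (RC r *v x) = Rabs r * vnorm x.
Proof. rewrite vnorm_scal, Cmod_RC. reflexivity. Qed.

Lemma vnorm_cis (t : R) x : vnorm (cis t *v x) = vnorm x.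
Proof. rewrite vnorm_scal, Cmod_cis. ring. Qed.

End VectorAlgebra.

Definition lin {B : Banach} (T : B -> B) : Prop :=
  (forall x y, T (x +v y) = T x +v T y) /\ (forall a x, T (a *v x) = a *v T x).

Definition inv_pair {B : Banach} (T S : B -> B) : Prop :=
  (forall x, S (T x) = x) /\ (forall x, T (S x) = x).

Section LinearMaps.
Context {B : Banach} (T : B -> B) (HT : lin T).

Lemma lin_add x y : T (x +v y) = T x +v T y.
Proof. apply HT. Qed.

Lemma lin_scal a x : T (a *v x) = a *v T x.
Proof. apply HT. Qed.

Lemma lin_0 : T vzero = vzero.
Proof. rewrite <- (vscal_C0 vzero), lin_scal, !vscal_C0. reflexivity. Qed.

Lemma lin_opp x : T (-v x) = -v T x.
Proof. rewrite vopp_scal, lin_scal, <- vopp_scal. reflexivity. Qed.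

Lemma lin_sub x y : T (x -v y) = T x -v T y.
Proof. unfold vsub. rewrite lin_add, lin_opp. reflexivity. Qed.

End LinearMaps.

Lemma lin_vscal {B : Banach} (a : Cx) : lin (B:=B) (vscal a).
Proof. split. intros; apply vscal_distr_v. intros; apply vscal_comm. Qed.

Lemma lin_vopp {B : Banach} : lin (B:=B) vopp.
Proof.
  split. intros; apply vopp_add. intros. rewrite !vopp_scal, !vscal_assoc, Cmul_comm. reflexivity.
Qed.

Definition minus_scalar {B : Banach} (T : B -> B) (l : Cx) (x : B) : B := T x -v l *v x.

Lemma minus_scalar_lin {B : Banach} (T : B -> B) l : lin T -> lin (minus_scalar T l).
Proof.
  intros HT. split; intros; unfold minus_scalar.
  - rewrite (lin_add T), vscal_distr_v by auto. apply vsub_add_distr.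
  - rewrite (lin_scal T), vscal_sub by auto. f_equal. apply vscal_comm.
Qed.

Lemma minus_scalar_diff {B : Banach} (T : B -> B) a b x :
  minus_scalar T a x -v minus_scalar T b x = Csub b a *v x.
Proof.
  unfold minus_scalar. rewrite vsub_sub_distr, vsub_diag, vsub_0l, vopp_sub, vscal_Csub.
  reflexivity.
Qed.

Lemma aut_structure {B : Banach} (T S : B -> B) : is_aut_with_inverse T S ->
  inv_pair T S /\ lin T /\ lin S /\ exists MT, 0 < MT /\ forall x, vnorm (T x) <= MT * vnorm x.
Proof.
  intros [[HT1 [HT2 [M HM]]] [[HS1 [HS2 _]] [H1 H2]]].
  repeat split; auto.
  exists (Rabs M + 1). split. pose proof (Rabs_pos M); lra.
  intros x. eapply Rle_trans. apply HM. apply Rmult_le_compat_r. apply vnorm_nonneg.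
  pose proof (Rle_abs M). lra.
Qed.

Lemma archi_nat (r : R) : exists n : nat, (0 < n)%nat /\ r < INR n.
Proof.
  destruct (archimed r) as [H1 H2].
  exists (Datatypes.S (Z.to_nat (up r))). split. lia.
  rewrite S_INR. destruct (Z_le_dec 0 (up r)).
  - rewrite INR_IZR_INZ, Z2Nat.id by auto. lra.
  - assert (IZR (up r) <= -1) by (apply IZR_le; lia). pose proof (pos_INR (Z.to_nat (up r))). lra.
Qed.

Lemma pow2_ge_INR (m : nat) : INR m <= 2 ^ m.
Proof.
  assert (1 <= 2 ^ m /\ INR m <= 2 ^ m) as [_ H]; auto.
  induction m as [|m [IH1 IH2]]. simpl. lra. rewrite S_INR. simpl. lra.
Qed.

Lemma window_max (f : Z -> R) (n : nat) :
  exists M, 0 <= M /\ forall k, (Z.abs k <= Z.of_nat n)%Z -> f k <= M.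
Proof.
  induction n as [|n [M [HM0 HM]]].
  - exists (Rmax 0 (f 0%Z)). split. apply Rmax_l. intros k Hk. replace k with 0%Z by lia. apply Rmax_r.
  - exists (Rmax M (Rmax (f (Z.of_nat (Datatypes.S n))) (f (- Z.of_nat (Datatypes.S n))%Z))).
    split. eapply Rle_trans. apply HM0. apply Rmax_l.
    intros k Hk. destruct (Z_le_dec (Z.abs k) (Z.of_nat n)).
    + eapply Rle_trans. apply HM; auto. apply Rmax_l.
    + eapply Rle_trans. 2: apply Rmax_r.
      destruct (Z_le_dec 0 k).
      * replace k with (Z.of_nat (Datatypes.S n)) by lia. apply Rmax_l.
      * replace k with (- Z.of_nat (Datatypes.S n))%Z by lia. apply Rmax_r.
Qed.

Definition tent (n : nat) (k : Z) : R := Rmax 0 (1 - IZR (Z.abs k) / INR n).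

Section Tent.
Context (n : nat) (Hn : (0 < n)%nat).

Lemma tent_0 : tent n 0 = 1.
Proof. unfold tent. simpl. unfold Rdiv. rewrite Rmult_0_l, Rminus_0_r. apply Rmax_right. lra. Qed.

Lemma tent_bounds k : 0 <= tent n k <= 1.
Proof.
  unfold tent. assert (0 < INR n) by (apply lt_0_INR; auto).
  assert (0 <= IZR (Z.abs k) / INR n).
  { apply Rmult_le_pos. apply IZR_le; lia. apply Rlt_le, Rinv_0_lt_compat; auto. }
  split. apply Rmax_l. apply Rmax_lub; lra.
Qed.

Lemma tent_out k : (Z.of_nat n <= Z.abs k)%Z -> tent n k = 0.
Proof.
  intros Hk. unfold tent. assert (0 < INR n) by (apply lt_0_INR; auto).
  apply Rmax_left. assert (INR n <= IZR (Z.abs k)) by (rewrite INR_IZR_INZ; apply IZR_le; lia).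
  assert (1 <= IZR (Z.abs k) / INR n).
  { apply Rmult_le_reg_r with (INR n); auto. unfold Rdiv. rewrite Rmult_assoc, Rinv_l; lra. }
  lra.
Qed.

Lemma tent_diff k : Rabs (tent n (k + 1) - tent n k) <= / INR n.
Proof.
  assert (0 < INR n) by (apply lt_0_INR; auto).
  assert (Hlip : forall a b, Rabs (Rmax 0 a - Rmax 0 b) <= Rabs (a - b)).
  { intros a b. unfold Rmax, Rabs. repeat destruct Rle_dec; repeat destruct Rcase_abs; lra. }
  unfold tent. eapply Rle_trans. apply Hlip.
  replace (1 - IZR (Z.abs (k + 1)) / INR n - (1 - IZR (Z.abs k) / INR n))
    with ((IZR (Z.abs k) - IZR (Z.abs (k+1))) * / INR n) by (field; lra).
  rewrite Rabs_mult, (Rabs_right (/ INR n)) by (apply Rle_ge, Rlt_le, Rinv_0_lt_compat; auto).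
  rewrite <- (Rmult_1_l (/ INR n)) at 2. apply Rmult_le_compat_r.
  apply Rlt_le, Rinv_0_lt_compat; auto.
  rewrite <- minus_IZR, <- abs_IZR. apply IZR_le. lia.
Qed.

End Tent.

Fixpoint vsum {B : Banach} (f : nat -> B) (m : nat) : B :=
  match m with O => vzero | S m' => vsum f m' +v f m' end.
Fixpoint rsum (f : nat -> R) (m : nat) : R :=
  match m with O => 0 | S m' => rsum f m' + f m' end.

Lemma rsum_le (f g : nat -> R) m : (forall i, (i < m)%nat -> f i <= g i) -> rsum f m <= rsum g m.
Proof.
  induction m; simpl; intros H. lra.
  pose proof (H m ltac:(lia)). pose proof (IHm ltac:(intros; apply H; lia)). lra.
Qed.

Lemma rsum_const a m : rsum (fun _ => a) m = INR m * a.
Proof. induction m; simpl rsum. simpl; ring. rewrite IHm, S_INR. ring. Qed.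

Lemma rsum_add f g m : rsum (fun i => f i + g i) m = rsum f m + rsum g m.
Proof. induction m; simpl. ring. rewrite IHm. ring. Qed.

Lemma rsum_scal a f m : rsum (fun i => a * f i) m = a * rsum f m.
Proof. induction m; simpl. ring. rewrite IHm. ring. Qed.

Lemma rsum_telescope (g : nat -> R) m : rsum (fun i => g (S i) - g i) m = g m - g O.
Proof. induction m; simpl. ring. rewrite IHm. ring. Qed.

Section VectorSums.
Context {B : Banach}.
Implicit Types (f g : nat -> B).

Lemma vsum_ext f g m : (forall i, (i < m)%nat -> f i = g i) -> vsum f m = vsum g m.
Proof.
  induction m; simpl; intros H. auto. rewrite IHm by (intros; apply H; lia). rewrite H by lia. auto.
Qed.

Lemma vsum_add f g m : vsum (fun i => f i +v g i) m = vsum f m +v vsum g m.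
Proof. induction m; simpl. rewrite vadd_0; auto. rewrite IHm. apply vadd_swap. Qed.

Lemma lin_vsum (T : B -> B) f m : lin T -> T (vsum f m) = vsum (fun i => T (f i)) m.
Proof. intros HT. induction m; simpl. apply lin_0; auto. rewrite lin_add, IHm by auto. reflexivity. Qed.

Lemma vsum_scal a f m : vsum (fun i => a *v f i) m = a *v vsum f m.
Proof. symmetry. apply (lin_vsum (vscal a)). apply lin_vscal. Qed.

Lemma vsum_sub f g m : vsum (fun i => f i -v g i) m = vsum f m -v vsum g m.
Proof.
  unfold vsub. rewrite vsum_add. f_equal. symmetry. apply (lin_vsum vopp). apply lin_vopp.
Qed.

Lemma vsum_opp f m : vsum (fun i => -v f i) m = -v vsum f m.
Proof. symmetry. apply (lin_vsum vopp). apply lin_vopp. Qed.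

Lemma vsum_norm f m : vnorm (vsum f m) <= rsum (fun i => vnorm (f i)) m.
Proof. induction m; simpl. rewrite vnorm_0; lra. eapply Rle_trans. apply vnorm_triangle. lra. Qed.

Lemma vsum_swap (f : nat -> nat -> B) m n :
  vsum (fun i => vsum (fun j => f i j) n) m = vsum (fun j => vsum (fun i => f i j) m) n.
Proof.
  induction m; simpl.
  - induction n; simpl; auto. rewrite <- IHn, vadd_0. auto.
  - rewrite IHm, <- vsum_add. reflexivity.
Qed.

Lemma vsum_shift (h : nat -> B) m : vsum (fun j => h (S j)) m = vsum h m -v h O +v h m.
Proof.
  induction m; simpl.
  - rewrite vsub_add. auto.
  - rewrite IHm. unfold vsub. f_equal. rewrite <- !vadd_assoc. f_equal. apply vadd_comm.
Qed.

Lemma vsum_zero f m : (forall i, (i < m)%nat -> f i = vzero) -> vsum f m = vzero.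
Proof.
  induction m; simpl; intros H; auto.
  rewrite IHm by (intros; apply H; lia). rewrite H by lia. apply vadd_0.
Qed.

Lemma vsum_single f m i0 : (i0 < m)%nat ->
  (forall i, (i < m)%nat -> i <> i0 -> f i = vzero) -> vsum f m = f i0.
Proof.
  induction m; intros H1 H2. lia. simpl.
  destruct (Nat.eq_dec i0 m).
  - subst. rewrite vsum_zero. apply vadd_0l. intros; apply H2; lia.
  - rewrite IHm; [ | lia | intros; apply H2; lia]. rewrite (H2 m) by lia. apply vadd_0.
Qed.

Lemma vsum_const (v : B) m : vsum (fun _ => v) m = RC (INR m) *v v.
Proof.
  induction m; simpl vsum. simpl. symmetry. apply (vscal_C0 v).
  rewrite IHm, S_INR. rewrite <- (vscal_1 v) at 2. rewrite <- vscal_distr_c. f_equal.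
  unfold RC, Cadd, Defs.C1. apply Cx_eq; simpl; ring.
Qed.

End VectorSums.

Lemma Z_two_sided_ind (P : Z -> Prop) :
  P 0%Z -> (forall k, P k -> P (k + 1)%Z) -> (forall k, P k -> P (k - 1)%Z) -> forall k, P k.
Proof.
  intros H0 Hs Hp. apply Z.peano_ind; auto.
Qed.

Section Iterates.
Context {B : Banach} (T S : B -> B) (HI : inv_pair T S).

Lemma zpow_succ (k : Z) x : zpow T S (k + 1) x = T (zpow T S k x).
Proof.
  assert (Hpos : forall n : nat, zpow T S (Z.of_nat n) x = Nat.iter n T x).
  { intros [|n]. reflexivity. simpl. rewrite SuccNat2Pos.id_succ. reflexivity. }
  assert (Hneg : forall n : nat, zpow T S (- Z.of_nat n) x = Nat.iter n S x).
  { intros [|n]. reflexivity. simpl. rewrite SuccNat2Pos.id_succ. reflexivity. }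
  destruct (Z_le_gt_dec 0 k).
  - replace k with (Z.of_nat (Z.to_nat k)) by lia.
    replace (Z.of_nat (Z.to_nat k) + 1)%Z with (Z.of_nat (Datatypes.S (Z.to_nat k))) by lia.
    rewrite !Hpos. reflexivity.
  - replace k with (- Z.of_nat (Datatypes.S (Z.to_nat (- k - 1))))%Z by lia.
    replace (- Z.of_nat (Datatypes.S (Z.to_nat (- k - 1))) + 1)%Z
      with (- Z.of_nat (Z.to_nat (- k - 1)))%Z by lia.
    rewrite !Hneg. simpl. symmetry. apply HI.
Qed.

Lemma zpow_pred (k : Z) x : zpow T S (k - 1) x = S (zpow T S k x).
Proof.
  replace k with ((k - 1) + 1)%Z at 2 by lia. rewrite zpow_succ. symmetry. apply HI.
Qed.

Lemma zpow_add (a b : Z) x : zpow T S (a + b) x = zpow T S a (zpow T S b x).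
Proof.
  pattern a; apply Z_two_sided_ind; [reflexivity| |]; intros j IH.
  - replace (j + 1 + b)%Z with ((j + b) + 1)%Z by lia. rewrite !zpow_succ, IH. reflexivity.
  - replace (j - 1 + b)%Z with ((j + b) - 1)%Z by lia. rewrite !zpow_pred, IH. reflexivity.
Qed.

Lemma lin_zpow (k : Z) : lin T -> lin S -> lin (zpow T S k).
Proof.
  intros HT HS. split; [intros x y | intros a x]; pattern k; apply Z_two_sided_ind; try reflexivity;
    intros j IH; rewrite ?zpow_succ, ?zpow_pred, IH;
    first [apply lin_add | apply lin_scal]; auto.
Qed.

End Iterates.

(** Multiplication by a unimodular scalar [l] is an isometric automorphism
    with inverse multiplication by [conj l]; its iterates are the rotations
    [v |-> l^k v]. *)
Definition rot_pow {B : Banach} (l : Cx) (k : Z) (v : B) : B :=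
  zpow (vscal l) (vscal (Cconj l)) k v.

Section Rotations.
Context {B : Banach} (l : Cx) (Hl : Cmod l = 1).

Lemma rot_inv : inv_pair (B:=B) (vscal l) (vscal (Cconj l)).
Proof.
  split; intros x; rewrite vscal_assoc; [|rewrite Cmul_comm]; rewrite Cconj_mul by auto;
    apply vscal_1.
Qed.

Lemma rot_pow_succ (k : Z) (v : B) : rot_pow l (k + 1) v = l *v rot_pow l k v.
Proof. apply zpow_succ, rot_inv. Qed.

Lemma rot_norm (k : Z) (v : B) : vnorm (rot_pow l k v) = vnorm v.
Proof.
  pattern k; apply Z_two_sided_ind; [reflexivity| |]; intros j IH; unfold rot_pow in *.
  - rewrite zpow_succ, vnorm_scal, Hl, IH by apply rot_inv. ring.
  - rewrite zpow_pred, vnorm_scal, Cmod_conj, Hl, IH by apply rot_inv. ring.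
Qed.

Lemma rot_comm (T : B -> B) (k : Z) (v : B) : lin T -> T (rot_pow l k v) = rot_pow l k (T v).
Proof.
  intros HT. pattern k; apply Z_two_sided_ind; [reflexivity| |]; intros j IH; unfold rot_pow in *;
    rewrite ?zpow_succ, ?zpow_pred, lin_scal, IH by (auto; apply rot_inv); reflexivity.
Qed.

End Rotations.

(** ** The defect operator on two-sided sequences *)

Definition defect {B : Banach} (T : B -> B) (u : Z -> B) (k : Z) : B := u (k + 1)%Z -v T (u k).

Fixpoint fwd_solution {B : Banach} (T : B -> B) (b : Z -> B) (m : nat) : B :=
  match m with
  | O => vzero
  | Datatypes.S m' => T (fwd_solution T b m') +v b (Z.of_nat m')
  end.
Fixpoint bwd_solution {B : Banach} (S : B -> B) (b : Z -> B) (m : nat) : B :=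
  match m with
  | O => vzero
  | Datatypes.S m' => S (bwd_solution S b m' -v b (- Z.of_nat m' - 1)%Z)
  end.
Definition defect_solution {B : Banach} (T S : B -> B) (b : Z -> B) (k : Z) : B :=
  if Z_le_dec 0 k then fwd_solution T b (Z.to_nat k) else bwd_solution S b (Z.to_nat (- k)).

Section Defect.
Context {B : Banach} (T S : B -> B) (HI : inv_pair T S) (HT : lin T).

Lemma defect_orbit y k : defect T (fun j => zpow T S j y) k = vzero.
Proof. unfold defect. rewrite zpow_succ by auto. apply vsub_diag. Qed.

Lemma defect_zero_orbit (u : Z -> B) :
  (forall k, defect T u k = vzero) -> forall k, u k = zpow T S k (u 0%Z).
Proof.
  intros H. apply Z_two_sided_ind; [reflexivity| |]; intros k IH.
  - rewrite zpow_succ, <- IH by auto. apply vsub_eq0, H.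
  - rewrite zpow_pred, <- IH by auto.
    pose proof (H (k - 1)%Z) as E. unfold defect in E. replace (k - 1 + 1)%Z with k in E by lia.
    apply vsub_eq0 in E. rewrite E. symmetry. apply HI.
Qed.

Lemma defect_sub u v k : defect T (fun j => u j -v v j) k = defect T u k -v defect T v k.
Proof. unfold defect. rewrite lin_sub by auto. apply vsub_sub_distr. Qed.

Lemma defect_scal a u k : defect T (fun j => a *v u j) k = a *v defect T u k.
Proof. unfold defect. rewrite lin_scal, vscal_sub by auto. reflexivity. Qed.

Lemma defect_solution_spec b k : defect T (defect_solution T S b) k = b k.
Proof.
  destruct HI as [HST HTS]. unfold defect, defect_solution.
  destruct (Z_le_dec 0 (k + 1)); destruct (Z_le_dec 0 k); try lia.
  - replace (Z.to_nat (k + 1)) with (Datatypes.S (Z.to_nat k)) by lia. simpl.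
    rewrite Z2Nat.id by lia. unfold vsub.
    rewrite (vadd_comm (T _)), <- vadd_assoc, vadd_opp, vadd_0. reflexivity.
  - assert (k = -1)%Z by lia. subst. simpl. rewrite HTS, !vsub_0l, vopp_opp. reflexivity.
  - replace (Z.to_nat (- k)) with (Datatypes.S (Z.to_nat (- (k + 1)))) by lia. simpl.
    rewrite HTS, Z2Nat.id by lia. replace (- - (k + 1) - 1)%Z with k by lia.
    unfold vsub. rewrite vopp_add, vopp_opp, vadd_assoc, vadd_opp, vadd_0l. reflexivity.
Qed.

End Defect.

(** ** Expansivity and unique shadowing *)

(** Two shadowing points of one pseudo-orbit stay within [2 eps] of each
    other, so expansivity with constant [c] gives uniqueness for [eps <= c/2]. *)
Lemma expansive_unique_shadowing {B : Banach} (T S : B -> B) :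
  shadowing T S -> expansive T S -> unique_shadowing T S.
Proof.
  intros Hsh [c [Hc HE]]. exists (c / 2), 1. split; [lra | split; [lra|]].
  intros eps He He0. destruct (Hsh eps He) as [d [Hd Hsd]].
  exists (Rmin d 1). split; [apply Rmin_pos; lra | split; [apply Rmin_r|]].
  intros xs Hxs. destruct (Hsd xs) as [y Hy].
  { intros n. eapply Rlt_le_trans. apply Hxs. apply Rmin_l. }
  exists y. split; auto. intros y' Hy'. apply HE. intros k.
  specialize (Hy k). specialize (Hy' k). rewrite dist_vsub in *.
  pose proof (vnorm_tri3 (zpow T S k y') (xs k) (zpow T S k y)).
  rewrite (vnorm_sub_sym (zpow T S k y') (xs k)) in *. lra.
Qed.

(** An orbit is an exact pseudo-orbit; two points whose orbits stay close
    both shadow it, hence coincide. *)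
Lemma unique_shadowing_expansive {B : Banach} (T S : B -> B) :
  inv_pair T S -> unique_shadowing T S -> expansive T S.
Proof.
  intros HI [e0 [d0 [He0 [Hd0 HU]]]]. exists (e0 / 2). split; [lra|].
  intros x y Hxy. destruct (HU e0 He0 (Rle_refl _)) as [d [Hd [_ Hsh]]].
  destruct (Hsh (fun k => zpow T S k y)) as [y0 [_ Hun]].
  { intros n. rewrite dist_vsub, zpow_succ, vsub_diag, vnorm_0 by auto. lra. }
  rewrite (Hun x), (Hun y). reflexivity.
  - intros n. rewrite dist_vsub, vsub_diag, vnorm_0. lra.
  - intros n. rewrite dist_vsub, vnorm_sub_sym, <- dist_vsub. specialize (Hxy n). lra.
Qed.

(** ** Linear dynamics: bounded orbits and the defect operator *)

Definition no_bounded_orbit {B : Banach} (T S : B -> B) : Prop :=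
  forall (z : B) (M : R), (forall k, vnorm (zpow T S k z) <= M) -> z = vzero.

Definition defect_inverse_bound {B : Banach} (T : B -> B) (K : R) : Prop :=
  forall (u : Z -> B) (Mu beta : R), (forall k, vnorm (u k) <= Mu) -> 0 < beta ->
    (forall k, vnorm (defect T u k) <= beta) -> forall k, vnorm (u k) <= K * beta.

Section LinearDynamics.
Context {B : Banach} (T S : B -> B) (HI : inv_pair T S) (HT : lin T) (HS : lin S).

Lemma zpow_vzero k : zpow T S k vzero = vzero.
Proof. apply lin_0, lin_zpow; auto. Qed.

Lemma zpow_vsub k x y : zpow T S k (x -v y) = zpow T S k x -v zpow T S k y.
Proof. apply lin_sub, lin_zpow; auto. Qed.

(** By linearity, scaling a bounded orbit down brings it into any
    neighbourhood of the orbit of 0. *)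
Lemma expansive_iff_no_bounded_orbit : expansive T S <-> no_bounded_orbit T S.
Proof.
  split.
  - intros [c [Hc HE]] z M HM.
    assert (0 <= M) as HM0 by (pose proof (HM 0%Z); pose proof (vnorm_nonneg z); simpl in *; lra).
    set (a := c / (M + 1)).
    assert (0 < a) as Ha by (unfold a; apply Rdiv_lt_0_compat; lra).
    assert (RC a *v z = vzero) as E.
    { apply HE. intros k. rewrite dist_vsub, zpow_vzero, vsub_0r.
      rewrite lin_scal, vnorm_RC, Rabs_right by (auto using lin_zpow; lra).
      apply Rle_trans with (a * M). apply Rmult_le_compat_l; auto; lra.
      unfold a. apply Rle_trans with (c / (M + 1) * (M + 1)).
      - apply Rmult_le_compat_l; [apply Rlt_le, Rdiv_lt_0_compat|]; lra.
      - right. field. lra. }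
    rewrite <- (vscal_RC_inv a z), E by lra. apply vscal_0.
  - intros H. exists 1. split; [lra|]. intros x y Hxy. apply vsub_eq0.
    apply (H _ 1). intros k. rewrite zpow_vsub. apply Hxy.
Qed.

(** Shadowing makes the defect operator onto the bounded sequences: a
    bounded [b] is, after rescaling, the defect of a pseudo-orbit; subtracting
    a shadowing orbit gives a bounded solution of [defect T u = b]. *)
Lemma shadowing_defect_onto : shadowing T S ->
  exists K, 0 < K /\ forall b beta, 0 < beta -> (forall k, vnorm (b k) <= beta) ->
    exists u, (forall k, defect T u k = b k) /\ (forall k, vnorm (u k) <= K * beta).
Proof.
  intros Hsh. destruct (Hsh 1 Rlt_0_1) as [delta [Hd Hsh1]].
  exists (2 / delta). split; [apply Rdiv_lt_0_compat; lra|].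
  intros b beta Hb Hbb. set (c := delta / (2 * beta)).
  assert (0 < c) as Hc by (unfold c; apply Rdiv_lt_0_compat; lra).
  set (xs := fun k => RC c *v defect_solution T S b k).
  assert (pseudo_orbit T delta xs) as Hpo.
  { intros n. rewrite dist_vsub. change (vnorm (defect T xs n) < delta). unfold xs.
    rewrite defect_scal, defect_solution_spec, vnorm_RC, Rabs_right by (auto; lra).
    apply Rle_lt_trans with (c * beta). apply Rmult_le_compat_l; auto; lra.
    unfold c. replace (delta / (2 * beta) * beta) with (delta / 2) by (field; lra). lra. }
  destruct (Hsh1 xs Hpo) as [y Hy].
  exists (fun k => RC (/ c) *v (xs k -v zpow T S k y)). split.
  - intros k. rewrite defect_scal, defect_sub, defect_orbit, vsub_0r by auto. unfold xs.
    rewrite defect_scal, defect_solution_spec by auto. apply vscal_RC_inv. lra.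
  - intros k. rewrite vnorm_RC, Rabs_right by (apply Rle_ge, Rlt_le, Rinv_0_lt_compat; lra).
    specialize (Hy k). rewrite dist_vsub in Hy.
    apply Rle_trans with (/ c * 1).
    + apply Rmult_le_compat_l; [apply Rlt_le, Rinv_0_lt_compat|]; lra.
    + unfold c. right. field. split; lra.
Qed.

(** Without bounded orbits, the defect operator is injective on bounded
    sequences: the difference of two solutions is a bounded orbit. *)
Lemma defect_injective : no_bounded_orbit T S ->
  forall u v Mu Mv, (forall k, vnorm (u k) <= Mu) -> (forall k, vnorm (v k) <= Mv) ->
  (forall k, defect T u k = defect T v k) -> forall k, u k = v k.
Proof.
  intros Hnb u v Mu Mv Hu Hv HL.
  set (d := fun j => u j -v v j).
  assert (forall k, defect T d k = vzero) as H0.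
  { intros k. unfold d. rewrite defect_sub, HL by auto. apply vsub_diag. }
  pose proof (defect_zero_orbit T S HI d H0) as Hd.
  assert (d 0%Z = vzero) as Hd0.
  { apply (Hnb _ (Mu + Mv)). intros k. rewrite <- Hd. unfold d.
    eapply Rle_trans. apply vnorm_sub_le. pose proof (Hu k); pose proof (Hv k); lra. }
  intros k. apply vsub_eq0. change (d k = vzero). rewrite Hd, Hd0. apply zpow_vzero.
Qed.

Lemma shadowing_expansive_defect_inverse : shadowing T S -> expansive T S ->
  exists K, 0 < K /\ defect_inverse_bound T K.
Proof.
  intros Hsh HE. apply expansive_iff_no_bounded_orbit in HE.
  destruct (shadowing_defect_onto Hsh) as [K [HK HL]].
  exists K. split; auto. intros u Mu beta Hu Hb Hlu k.
  destruct (HL (defect T u) beta Hb Hlu) as [v [Hv1 Hv2]].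
  rewrite (defect_injective HE u v Mu (K * beta) Hu Hv2); auto.
Qed.

(** ** Uniform expansivity *)

Lemma uniform_expansion_growth : uniformly_expansive T S ->
  forall z, z <> vzero -> forall m : nat, exists k, 2 ^ m * vnorm z <= vnorm (zpow T S k z).
Proof.
  intros [n [_ HU]] z Hz.
  assert (0 < vnorm z) as Hz0.
  { destruct (vnorm_nonneg z) as [|E]; auto. symmetry in E. now apply vnorm_eq0 in E. }
  induction m as [|m [k Hk]].
  - exists 0%Z. simpl. lra.
  - set (w := zpow T S k z). fold w in Hk.
    assert (0 < vnorm w) as Hw.
    { pose proof (pow_lt 2 m ltac:(lra)). nra. }
    set (w' := RC (/ vnorm w) *v w).
    assert (vnorm w' = 1) as Hw'.
    { unfold w'. rewrite vnorm_RC, Rabs_right. field. lra.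
      apply Rle_ge, Rlt_le, Rinv_0_lt_compat; auto. }
    assert (Hj : forall j, vnorm w * vnorm (zpow T S j w') = vnorm (zpow T S (j + k) z)).
    { intros j. unfold w'. rewrite lin_scal, vnorm_RC by (apply lin_zpow; auto).
      rewrite Rabs_right by (apply Rle_ge, Rlt_le, Rinv_0_lt_compat; auto).
      rewrite (zpow_add T S HI j k z). fold w. field. lra. }
    destruct (HU w' Hw') as [H|H]; [exists (Z.of_nat n + k)%Z | exists (- Z.of_nat n + k)%Z];
      rewrite <- Hj; simpl; nra.
Qed.

Lemma uniformly_expansive_expansive : uniformly_expansive T S -> expansive T S.
Proof.
  intros HU. apply expansive_iff_no_bounded_orbit. intros z M HM.
  destruct (classic (z = vzero)) as [|Hz]; auto. exfalso.
  pose proof (uniform_expansion_growth HU z Hz) as Hg.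
  assert (0 < vnorm z) as Hz0.
  { destruct (vnorm_nonneg z) as [|E]; auto. symmetry in E. now apply vnorm_eq0 in E. }
  destruct (archi_nat (M / vnorm z)) as [m [_ Hm]].
  destruct (Hg m) as [k Hk]. pose proof (HM k). pose proof (pow2_ge_INR m).
  assert (M < INR m * vnorm z).
  { apply Rmult_lt_compat_r with (r := vnorm z) in Hm; auto.
    unfold Rdiv in Hm. rewrite Rmult_assoc, Rinv_l in Hm; lra. }
  nra.
Qed.

(** The orbit of [x] damped by the tent function of half-width [n]: a
    finitely supported sequence whose defect is of order [1/n]. *)
Definition damped_orbit (n : nat) (x : B) (k : Z) : B := RC (tent n k) *v zpow T S k x.

Lemma damped_orbit_defect n x k :
  defect T (damped_orbit n x) k = RC (tent n (k + 1) - tent n k) *v zpow T S (k + 1) x.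
Proof.
  unfold defect, damped_orbit. rewrite lin_scal, <- zpow_succ by auto. apply vscal_RC_sub.
Qed.

Lemma damped_orbit_out n x k : (0 < n)%nat -> (Z.of_nat n <= Z.abs k)%Z ->
  damped_orbit n x k = vzero.
Proof. intros Hn Hk. unfold damped_orbit. rewrite tent_out by auto. apply vscal_C0. Qed.

Lemma damped_orbit_0 n x : (0 < n)%nat -> damped_orbit n x 0 = x.
Proof. intros Hn. unfold damped_orbit. rewrite tent_0 by auto. apply vscal_1. Qed.

Lemma damped_orbit_bounds n x P : (0 < n)%nat -> 0 <= P ->
  (forall j, (Z.abs j <= Z.of_nat n)%Z -> vnorm (zpow T S j x) <= P) ->
  forall k, vnorm (damped_orbit n x k) <= P /\ vnorm (defect T (damped_orbit n x) k) <= P / INR n.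
Proof.
  intros Hn HP Hx k. assert (0 < INR n) by (apply lt_0_INR; auto). split.
  - destruct (Z_le_dec (Z.abs k) (Z.of_nat n)).
    + unfold damped_orbit. rewrite vnorm_RC. pose proof (tent_bounds n Hn k).
      rewrite Rabs_right by lra. pose proof (Hx k ltac:(auto)).
      pose proof (vnorm_nonneg (zpow T S k x)). nra.
    + rewrite damped_orbit_out, vnorm_0 by (auto; lia). auto.
  - rewrite damped_orbit_defect, vnorm_RC.
    destruct (Z_le_dec (Z.abs (k + 1)) (Z.of_nat n)).
    + pose proof (tent_diff n Hn k). pose proof (Hx _ l).
      unfold Rdiv. rewrite Rmult_comm. apply Rmult_le_compat; auto using Rabs_pos, vnorm_nonneg.
    + rewrite !tent_out by (auto; lia). rewrite Rminus_0_r, Rabs_R0, Rmult_0_l.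
      apply Rmult_le_pos; [|apply Rlt_le, Rinv_0_lt_compat]; auto.
Qed.

Lemma damped_orbit_estimate K n x P : defect_inverse_bound T K -> (0 < n)%nat -> 0 < P ->
  (forall j, (Z.abs j <= Z.of_nat n)%Z -> vnorm (zpow T S j x) <= P) ->
  vnorm x <= K * (P / INR n).
Proof.
  intros HK Hn HP Hx. assert (0 < INR n) by (apply lt_0_INR; auto).
  pose proof (damped_orbit_bounds n x P Hn ltac:(lra) Hx) as Hb.
  rewrite <- (damped_orbit_0 n x Hn).
  apply (HK _ P); [apply Hb | apply Rdiv_lt_0_compat; auto | apply Hb].
Qed.

(** If the orbit of [x] is small at the ends of the window [-n, n], it is
    controlled on the whole window: cutting it off outside the window gives
    a bounded sequence with defect of order [|T|]. *)
Lemma orbit_window_bound K MT : defect_inverse_bound T K -> 0 < MT ->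
  (forall x, vnorm (T x) <= MT * vnorm x) ->
  forall (n : nat) x, vnorm (zpow T S (Z.of_nat n) x) < 2 ->
  vnorm (zpow T S (- Z.of_nat n) x) < 2 ->
  forall j, (Z.abs j <= Z.of_nat n)%Z -> vnorm (zpow T S j x) <= K * (2 * (MT + 1)).
Proof.
  intros HK HMT HTb n x H1 H2.
  set (u := fun k => if Z_le_dec (Z.abs k) (Z.of_nat n) then zpow T S k x else vzero).
  destruct (window_max (fun k => vnorm (zpow T S k x)) n) as [M [HM0 HM]].
  intros j Hj.
  replace (zpow T S j x) with (u j) by (unfold u; destruct (Z_le_dec (Z.abs j) (Z.of_nat n)); tauto).
  apply (HK u M); [| lra |].
  - intros k. unfold u. destruct (Z_le_dec (Z.abs k) (Z.of_nat n)); auto. rewrite vnorm_0; auto.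
  - intros k. unfold defect, u.
    destruct (Z_le_dec (Z.abs (k + 1)) (Z.of_nat n)); destruct (Z_le_dec (Z.abs k) (Z.of_nat n)).
    + rewrite zpow_succ, vsub_diag, vnorm_0 by auto. lra.
    + replace (k + 1)%Z with (- Z.of_nat n)%Z by lia. rewrite lin_0, vsub_0r by auto. lra.
    + replace k with (Z.of_nat n) by lia. rewrite vsub_0l, vnorm_opp.
      eapply Rle_trans. apply HTb. pose proof (vnorm_nonneg (zpow T S (Z.of_nat n) x)). nra.
    + rewrite lin_0, vsub_0r, vnorm_0 by auto. lra.
Qed.

(** Choosing [n > K^2 (2 |T| + 2)], a unit vector whose orbit stays below 2
    at times [n] and [-n] would have norm less than 1. *)
Lemma expansive_uniformly_expansive : shadowing T S -> expansive T S ->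
  (exists MT, 0 < MT /\ forall x, vnorm (T x) <= MT * vnorm x) -> uniformly_expansive T S.
Proof.
  intros Hsh HE [MT [HMT HTb]].
  destruct (shadowing_expansive_defect_inverse Hsh HE) as [K [HK HKb]].
  set (P := K * (2 * (MT + 1))). assert (0 < P) by (unfold P; nra).
  destruct (archi_nat (K * P)) as [n [Hn Hnb]].
  exists n. split; auto. intros x Hx.
  destruct (Rlt_le_dec (vnorm (zpow T S (Z.of_nat n) x)) 2) as [H1|H1]; [|left; auto].
  destruct (Rlt_le_dec (vnorm (zpow T S (- Z.of_nat n) x)) 2) as [H2|H2]; [|right; auto].
  exfalso. assert (0 < INR n) by (apply lt_0_INR; auto).
  pose proof (damped_orbit_estimate K n x P HKb Hn ltac:(auto)
    (orbit_window_bound K MT HKb HMT HTb n x H1 H2)) as Hx1.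
  assert (K * (P / INR n) < 1).
  { apply Rmult_lt_reg_r with (INR n); auto. unfold Rdiv.
    replace (K * (P * / INR n) * INR n) with (K * P) by (field; lra). lra. }
  lra.
Qed.

(** ** Expansivity implies hyperbolicity *)

(** On the unit circle, an eigenvector [T d = l d] has the bounded orbit
    [(l^k d)_k], so it vanishes. *)
Lemma unimodular_eigenvector_zero l d : no_bounded_orbit T S -> Cmod l = 1 ->
  T d = l *v d -> d = vzero.
Proof.
  intros Hnb Hl Hd. set (v := fun k => rot_pow l k d).
  assert (forall k, defect T v k = vzero) as H0.
  { intros k. unfold defect, v. rewrite rot_comm, Hd, rot_pow_succ by auto.
    rewrite (rot_comm l Hl (vscal l)) by apply lin_vscal. apply vsub_diag. }
  apply (Hnb d (vnorm d)). intros k.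
  rewrite <- (defect_zero_orbit T S HI v H0). unfold v. rewrite rot_norm by auto. lra.
Qed.

(** Shadowing solves [(T - l) x = y] with [|x| <= K |y|], uniformly in [l]
    on the unit circle: the bounded solution of [defect T u = (-l^k y)_k] is
    unique, hence invariant under [u_k |-> conj l * u_(k+1)], i.e.
    [u_(k+1) = l u_k], and then [x = u_0] solves the equation. *)
Lemma shadowing_resolvent : shadowing T S -> no_bounded_orbit T S ->
  exists K, 0 < K /\ forall l, Cmod l = 1 -> forall y,
    exists x, minus_scalar T l x = y /\ vnorm x <= K * vnorm y.
Proof.
  intros Hsh Hnb. destruct (shadowing_defect_onto Hsh) as [K [HK HL]].
  exists K. split; auto. intros l Hl y.
  destruct (Req_dec (vnorm y) 0) as [Hy0|Hy0].
  { exists vzero. apply vnorm_eq0 in Hy0. subst.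
    unfold minus_scalar. rewrite lin_0, vscal_0, vsub_diag, vnorm_0 by auto. split; auto. lra. }
  pose proof (vnorm_nonneg y).
  destruct (rot_inv (B:=B) l Hl) as [HQP HPQ].
  set (b := fun k => rot_pow l k (-v y)).
  destruct (HL b (vnorm y) ltac:(lra)) as [u [Hu1 Hu2]].
  { intros k. unfold b. rewrite rot_norm, vnorm_opp by auto. lra. }
  set (u' := fun k => Cconj l *v u (k + 1)%Z).
  assert (forall k, defect T u' k = defect T u k) as HLu.
  { intros k. unfold u'. rewrite defect_scal by auto.
    change (Cconj l *v defect T u (k + 1) = defect T u k).
    rewrite !Hu1. unfold b. rewrite rot_pow_succ by auto. apply HQP. }
  assert (u' 0%Z = u 0%Z) as E.
  { apply (defect_injective Hnb u' u (K * vnorm y) (K * vnorm y)); auto.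
    intros k. unfold u'. rewrite vnorm_scal, Cmod_conj, Hl, Rmult_1_l. auto. }
  exists (u 0%Z). split; auto.
  assert (u 1%Z = l *v u 0%Z) as E1 by (rewrite <- E; unfold u'; simpl; symmetry; apply HPQ).
  pose proof (Hu1 0%Z) as H1. unfold defect in H1. simpl in H1. rewrite E1 in H1.
  unfold b in H1. simpl in H1. unfold minus_scalar. rewrite <- (vopp_opp y), <- H1. symmetry. apply vopp_sub.
Qed.

(** The solution operator is linear and bounded by injectivity, which
    places no unimodular [l] in the spectrum. *)
Lemma expansive_hyperbolic : shadowing T S -> expansive T S -> hyperbolic T.
Proof.
  intros Hsh HE. apply expansive_iff_no_bounded_orbit in HE.
  destruct (shadowing_resolvent Hsh HE) as [K [HK Hsol]].
  intros l Hl Hsp. apply Hsp.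
  assert (Hinj : forall x1 x2, minus_scalar T l x1 = minus_scalar T l x2 -> x1 = x2).
  { intros x1 x2 H. apply vsub_eq0, (unimodular_eigenvector_zero l); auto. apply vsub_eq0.
    change (minus_scalar T l (x1 -v x2) = vzero).
    rewrite lin_sub, H by (apply minus_scalar_lin; auto). apply vsub_diag. }
  assert (forall y, exists x, minus_scalar T l x = y /\ vnorm x <= K * vnorm y) as Hex by auto.
  apply choice in Hex. destruct Hex as [Rv HRv].
  assert (HRu : forall x y, minus_scalar T l x = y -> Rv y = x).
  { intros x y Hxy. apply Hinj. rewrite Hxy. apply HRv. }
  exists Rv. split; [|split].
  - split; [|split].
    + intros x y. apply HRu. rewrite lin_add by (apply minus_scalar_lin; auto).
      rewrite !(proj1 (HRv _)). reflexivity.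
    + intros a x. apply HRu. rewrite lin_scal by (apply minus_scalar_lin; auto).
      rewrite (proj1 (HRv _)). reflexivity.
    + exists K. intros y. apply HRv.
  - intros x. apply HRu. reflexivity.
  - intros x. apply HRv.
Qed.

End LinearDynamics.

(** ** Hyperbolicity implies expansivity *)

Lemma lip_continuity (f : R -> R) x0 :
  (forall x y, Rabs (f x - f y) <= Rabs (x - y)) -> continuity_pt f x0.
Proof.
  intros H. unfold continuity_pt, continue_in, limit1_in, limit_in. intros eps He.
  exists eps. split; auto. intros x [_ Hx]. simpl in *. unfold R_dist in *.
  eapply Rle_lt_trans. apply H. auto.
Qed.

Definition lower_bound_set {B : Banach} (T : B -> B) (t : R) (r : R) : Prop :=
  r <= 1 /\ forall x, r * vnorm x <= vnorm (minus_scalar T (cis t) x).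

Definition bounded_below_on_circle {B : Banach} (T : B -> B) (c : R) : Prop :=
  0 < c /\ forall t, -(2*PI) <= t <= 2 * PI ->
    forall x, c * vnorm x <= vnorm (minus_scalar T (cis t) x).

Section LowerBound.
Context {B : Banach} (T : B -> B).

Definition lower_bound (t : R) : R.
Proof.
  refine (proj1_sig (completeness (lower_bound_set T t) _ _)).
  - exists 1. intros r [H _]. auto.
  - exists 0. split; [lra|]. intros x. rewrite Rmult_0_l. apply vnorm_nonneg.
Defined.

Lemma lower_bound_lub t : is_lub (lower_bound_set T t) (lower_bound t).
Proof. unfold lower_bound. destruct (completeness _ _ _). auto. Qed.

Lemma lower_bound_ge t r : lower_bound_set T t r -> r <= lower_bound t.
Proof. apply lower_bound_lub. Qed.

Lemma lower_bound_le1 t : lower_bound t <= 1.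
Proof. apply lower_bound_lub. intros r [H _]. auto. Qed.

Lemma lower_bound_spec t x : lower_bound t * vnorm x <= vnorm (minus_scalar T (cis t) x).
Proof.
  destruct (Req_dec (vnorm x) 0) as [H|H].
  - rewrite H, Rmult_0_r. apply vnorm_nonneg.
  - pose proof (vnorm_nonneg x).
    assert (lower_bound t <= vnorm (minus_scalar T (cis t) x) / vnorm x) as H1.
    { apply lower_bound_lub. intros r [_ Hr]. pose proof (Hr x).
      apply Rmult_le_reg_r with (vnorm x). lra. unfold Rdiv. rewrite Rmult_assoc, Rinv_l; lra. }
    apply Rmult_le_compat_r with (r := vnorm x) in H1; [|lra].
    unfold Rdiv in H1. rewrite Rmult_assoc, Rinv_l in H1; lra.
Qed.

(** Moving [t] by [d] perturbs [T - e^(it)] by at most [|d|] in norm. *)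
Lemma lower_bound_lip t s : lower_bound t - Rabs (t - s) <= lower_bound s.
Proof.
  set (d := Cmod (Csub (cis s) (cis t))).
  assert (d <= Rabs (t - s)) by (unfold d; rewrite Rabs_minus_sym; apply cis_chord).
  assert (0 <= d) by apply Cmod_nonneg.
  assert (lower_bound t - d <= lower_bound s).
  { apply lower_bound_ge. split. pose proof (lower_bound_le1 t). lra.
    intros x. pose proof (lower_bound_spec t x).
    pose proof (vnorm_rev (minus_scalar T (cis t) x) (minus_scalar T (cis s) x)) as H2.
    rewrite minus_scalar_diff, vnorm_scal in H2. fold d in H2. nra. }
  lra.
Qed.

Lemma lower_bound_continuous t : continuity_pt lower_bound t.
Proof.
  apply lip_continuity. intros x y. pose proof (lower_bound_lip x y).
  pose proof (lower_bound_lip y x). rewrite Rabs_minus_sym in H0. apply Rabs_le. lra.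
Qed.

(** At a point of the resolvent set the lower bound is positive (the
    inverse of the norm of the resolvent). *)
Lemma lower_bound_pos t : hyperbolic T -> 0 < lower_bound t.
Proof.
  intros H. pose proof (H (cis t) (Cmod_cis t)) as Hn. apply NNPP in Hn.
  destruct Hn as [Rv [[_ [_ [M HM]]] [H1 _]]].
  set (M' := Rabs M + 1). assert (0 < M') by (unfold M'; pose proof (Rabs_pos M); lra).
  apply Rlt_le_trans with (Rmin 1 (/ M')).
  { apply Rmin_pos. lra. apply Rinv_0_lt_compat; auto. }
  apply lower_bound_ge. split. apply Rmin_l. intros x.
  pose proof (HM (minus_scalar T (cis t) x)) as H3.
  assert (Rv (minus_scalar T (cis t) x) = x) as H1x by apply H1. rewrite H1x in H3.
  pose proof (vnorm_nonneg x). pose proof (vnorm_nonneg (minus_scalar T (cis t) x)).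
  apply Rle_trans with (/ M' * vnorm x). apply Rmult_le_compat_r; auto. apply Rmin_r.
  apply Rle_trans with (/ M' * (M' * vnorm (minus_scalar T (cis t) x))).
  - apply Rmult_le_compat_l. apply Rlt_le, Rinv_0_lt_compat; auto.
    eapply Rle_trans. apply H3. apply Rmult_le_compat_r; auto. unfold M'. pose proof (Rle_abs M). lra.
  - right. field. lra.
Qed.

(** By continuity and compactness, a hyperbolic [T] is bounded below
    uniformly on the circle. *)
Lemma hyperbolic_bounded_below : hyperbolic T -> exists c, bounded_below_on_circle T c.
Proof.
  intros H. pose proof PI_RGT_0.
  destruct (continuity_ab_min lower_bound (-(2*PI)) (2*PI) ltac:(lra)
    (fun c _ => lower_bound_continuous c)) as [tm [Hm1 Hm2]].
  exists (lower_bound tm). split. apply lower_bound_pos; auto.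
  intros t Ht x. eapply Rle_trans. 2: apply lower_bound_spec.
  apply Rmult_le_compat_r. apply vnorm_nonneg. auto.
Qed.

End LowerBound.

Definition resolvent {B : Banach} (T : B -> B) (t : R) (w : B) : B :=
  epsilon (inhabits vzero) (fun x => minus_scalar T (cis t) x = w).

Section Resolvent.
Context {B : Banach} (T : B -> B) (HT : lin T) (Hh : hyperbolic T).
Context (c : R) (Hc : bounded_below_on_circle T c).

Lemma resolvent_spec t w : minus_scalar T (cis t) (resolvent T t w) = w.
Proof.
  unfold resolvent. apply epsilon_spec.
  pose proof (Hh (cis t) (Cmod_cis t)) as Hn. apply NNPP in Hn.
  destruct Hn as [Rv [_ [_ H2]]]. eauto.
Qed.

Lemma minus_scalar_inj t x1 x2 : -(2*PI) <= t <= 2 * PI ->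
  minus_scalar T (cis t) x1 = minus_scalar T (cis t) x2 -> x1 = x2.
Proof.
  intros Ht H. destruct Hc as [Hc0 Hl]. apply vsub_eq0, vnorm_eq0.
  pose proof (Hl t Ht (x1 -v x2)) as H0.
  rewrite lin_sub, H, vsub_diag, vnorm_0 in H0 by (apply minus_scalar_lin; auto).
  pose proof (vnorm_nonneg (x1 -v x2)). nra.
Qed.

Lemma resolvent_bound t w : -(2*PI) <= t <= 2 * PI -> c * vnorm (resolvent T t w) <= vnorm w.
Proof.
  intros Ht. destruct Hc as [_ Hl]. rewrite <- (resolvent_spec t w) at 2. apply Hl; auto.
Qed.

Lemma resolvent_lip t s w : -(2*PI) <= t <= 2 * PI -> -(2*PI) <= s <= 2 * PI ->
  c * c * vnorm (resolvent T t w -v resolvent T s w) <= Rabs (t - s) * vnorm w.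
Proof.
  intros Ht Hs. destruct Hc as [Hc0 Hl].
  set (a := resolvent T s w). set (b := resolvent T t w).
  assert (minus_scalar T (cis t) (b -v a) = Csub (cis t) (cis s) *v a) as E.
  { rewrite lin_sub by (apply minus_scalar_lin; auto). unfold b. rewrite resolvent_spec.
    rewrite <- (resolvent_spec s w) at 1. fold a. apply minus_scalar_diff. }
  pose proof (Hl t Ht (b -v a)) as H0. rewrite E, vnorm_scal in H0.
  pose proof (cis_chord t s). pose proof (Cmod_nonneg (Csub (cis t) (cis s))).
  pose proof (resolvent_bound s w Hs). fold a in H2.
  pose proof (vnorm_nonneg a). pose proof (vnorm_nonneg (b -v a)). pose proof (Rabs_pos (t - s)).
  assert (c * vnorm (b -v a) <= Rabs (t - s) * vnorm a) by nra.
  nra.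
Qed.

End Resolvent.

(** ** Discrete Fourier analysis on the circle *)

(** The [N]-th roots of unity [e^(i angle N j)], [j < N]. *)
Definition angle (N j : nat) : R := 2 * PI / INR N * INR j.

Lemma angle_range (N j : nat) : (0 < N)%nat -> (j < N)%nat ->
  -(2*PI) <= angle N j <= 2 * PI /\ -(2*PI) <= 2 * PI / INR N * (INR j - 1) <= 2 * PI.
Proof.
  intros HN Hj. unfold angle. pose proof PI_RGT_0. assert (1 <= INR N) by (apply (le_INR 1); lia).
  assert (INR j + 1 <= INR N) by (rewrite <- S_INR; apply le_INR; lia).
  pose proof (pos_INR j).
  assert (0 <= 2 * PI / INR N * INR j <= 2 * PI).
  { split. apply Rmult_le_pos; auto. apply Rlt_le, Rdiv_lt_0_compat; lra.
    apply Rmult_le_reg_l with (INR N). lra.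
    replace (INR N * (2 * PI / INR N * INR j)) with (2 * PI * INR j) by (field; lra). nra. }
  assert (2 * PI / INR N <= 2 * PI).
  { apply Rmult_le_reg_l with (INR N). lra.
    replace (INR N * (2 * PI / INR N)) with (2 * PI) by (field; lra). nra. }
  assert (0 <= 2 * PI / INR N) by (apply Rlt_le, Rdiv_lt_0_compat; lra).
  split. lra.
  replace (2 * PI / INR N * (INR j - 1)) with (2 * PI / INR N * INR j - 2 * PI / INR N) by ring. lra.
Qed.

Lemma frequency_angle (N : nat) (k : Z) : (0 < N)%nat -> (2 * Z.abs k <= Z.of_nat N)%Z ->
  Rabs (- (2 * PI / INR N) * IZR k) = 2 * PI / INR N * IZR (Z.abs k) /\
  Rabs (- (2 * PI / INR N) * IZR k) <= PI.
Proof.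
  intros HN Hk. pose proof PI_RGT_0. assert (0 < INR N) by (apply lt_0_INR; auto).
  assert (E : Rabs (- (2 * PI / INR N) * IZR k) = 2 * PI / INR N * IZR (Z.abs k)).
  { rewrite Rabs_mult, Rabs_Ropp, <- abs_IZR.
    rewrite Rabs_right by (apply Rle_ge, Rlt_le, Rdiv_lt_0_compat; lra). auto. }
  split; auto. rewrite E.
  assert (2 * IZR (Z.abs k) <= INR N) by (rewrite INR_IZR_INZ, <- mult_IZR; apply IZR_le; auto).
  apply Rmult_le_reg_l with (INR N); auto.
  replace (INR N * (2 * PI / INR N * IZR (Z.abs k))) with (PI * (2 * IZR (Z.abs k))) by (field; lra).
  nra.
Qed.

Lemma roots_of_unity_sum {B : Banach} (N : nat) (k : Z) (v : B) : (0 < N)%nat ->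
  (0 < Z.abs k)%Z -> (2 * Z.abs k <= Z.of_nat N)%Z ->
  vsum (fun j => cis (- angle N j * IZR k) *v v) N = vzero.
Proof.
  intros HN Hk1 Hk2. pose proof PI_RGT_0. assert (0 < INR N) by (apply lt_0_INR; auto).
  set (y := - (2 * PI / INR N) * IZR k).
  set (h := fun j => cis (INR j * y) *v v).
  set (Sm := vsum (fun j => cis (- angle N j * IZR k) *v v) N).
  assert (Sm = vsum h N) as E1.
  { apply vsum_ext. intros i _. unfold h, y, angle. f_equal. f_equal. ring. }
  assert (cis y *v Sm = Sm) as E2.
  { rewrite E1, <- vsum_scal.
    transitivity (vsum (fun j => h (Datatypes.S j)) N).
    { apply vsum_ext. intros i _. unfold h. rewrite vscal_assoc, Cmul_cis, S_INR.
      f_equal. f_equal. ring. }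
    rewrite vsum_shift.
    assert (h N = h O) as E3.
    { unfold h. f_equal. simpl. replace (INR N * y) with (0 * y + 2 * IZR (- k) * PI).
      apply cis_period. unfold y. rewrite opp_IZR. field. lra. }
    rewrite E3. apply vsub_add. }
  assert (Csub Defs.C1 (cis y) *v Sm = vzero) as E4.
  { rewrite vscal_Csub, vscal_1, E2. apply vsub_diag. }
  apply (f_equal vnorm) in E4. rewrite vnorm_scal, vnorm_0 in E4.
  destruct (frequency_angle N k HN Hk2) as [Ey Hy].
  pose proof (cis_chord_lower y Hy). fold y in Ey.
  assert (0 < Rabs y).
  { rewrite Ey. apply Rmult_lt_0_compat. apply Rdiv_lt_0_compat; lra. apply IZR_lt; auto. }
  apply vnorm_eq0. pose proof (vnorm_nonneg Sm). nra.
Qed.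

(** The [k]-th discrete Fourier coefficient of [t |-> resolvent T t w]. *)
Definition resolvent_coefficient {B : Banach} (T : B -> B) (N : nat) (k : Z) (w : B) : B :=
  vsum (fun j => cis (- angle N j * IZR k) *v resolvent T (angle N j) w) N.

Section ResolventCoefficients.
Context {B : Banach} (T : B -> B) (HT : lin T) (Hh : hyperbolic T).
Context (c : R) (Hc : bounded_below_on_circle T c) (N : nat) (HN : (0 < N)%nat).

Lemma resolvent_coefficient_bound k w : c * vnorm (resolvent_coefficient T N k w) <= INR N * vnorm w.
Proof.
  pose proof Hc as [Hc0 _]. unfold resolvent_coefficient.
  eapply Rle_trans. apply Rmult_le_compat_l. lra. apply vsum_norm.
  rewrite <- rsum_scal, <- rsum_const. apply rsum_le. intros i Hi. rewrite vnorm_cis.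
  apply resolvent_bound; auto. apply angle_range; auto.
Qed.

(** Decay of the coefficients: shifting the sum by one root of unity and
    using the Lipschitz bound on the resolvent (summation by parts) gains a
    factor [1/|k|]. *)
Lemma resolvent_coefficient_decay k w : (0 < Z.abs k)%Z -> (2 * Z.abs k <= Z.of_nat N)%Z ->
  IZR (Z.abs k) * c * c * vnorm (resolvent_coefficient T N k w) <= 3 * INR N * vnorm w.
Proof.
  intros Hk1 Hk2. pose proof Hc as [Hc0 _]. pose proof PI_RGT_0.
  assert (0 < INR N) by (apply lt_0_INR; auto).
  set (a := 2 * PI / INR N). assert (0 < a) by (unfold a; apply Rdiv_lt_0_compat; lra).
  set (y := - a * IZR k).
  set (G := resolvent_coefficient T N k w).
  set (h := fun j => cis (- (a * INR j) * IZR k) *v resolvent T (a * (INR j - 1)) w).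
  assert (cis y *v G = vsum h N) as E1.
  { unfold G, resolvent_coefficient, angle. fold a. rewrite <- vsum_scal.
    transitivity (vsum (fun j => h (Datatypes.S j)) N).
    { apply vsum_ext. intros i _. unfold h. rewrite vscal_assoc, Cmul_cis, S_INR. f_equal.
      f_equal. unfold y; ring. do 3 f_equal. ring. }
    rewrite vsum_shift.
    assert (h N = h O) as E3.
    { unfold h. f_equal.
      - simpl. replace (- (a * INR N) * IZR k) with (- (a * 0) * IZR k + 2 * IZR (- k) * PI).
        apply cis_period. unfold a. rewrite opp_IZR. field. lra.
      - simpl. unfold resolvent.
        replace (a * (INR N - 1)) with (a * (0 - 1) + 2 * IZR 1 * PI) by (unfold a; field; lra).
        rewrite cis_period. reflexivity. }
    rewrite E3. apply vsub_add. }
  assert (E4 : c * c * vnorm (G -v cis y *v G) <= INR N * (a * vnorm w)).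
  { rewrite E1. unfold G, resolvent_coefficient, angle. fold a. rewrite <- vsum_sub.
    eapply Rle_trans. apply Rmult_le_compat_l. nra. apply vsum_norm.
    rewrite <- rsum_scal, <- rsum_const. apply rsum_le. intros i Hi.
    unfold h. rewrite <- vscal_sub, vnorm_cis.
    destruct (angle_range N i HN Hi) as [R1 R2]. unfold angle in R1. fold a in R1, R2.
    eapply Rle_trans. apply resolvent_lip; eauto.
    replace (a * INR i - a * (INR i - 1)) with a by ring. rewrite Rabs_right by lra. lra. }
  rewrite <- (vscal_1 G) in E4 at 1. rewrite <- vscal_Csub, vnorm_scal in E4.
  destruct (frequency_angle N k HN Hk2) as [Ey Hy]. fold a y in Ey, Hy.
  pose proof (cis_chord_lower y Hy) as Hcl. rewrite Ey in Hcl.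
  pose proof (vnorm_nonneg G). pose proof (vnorm_nonneg w).
  assert (0 < IZR (Z.abs k)) by (apply IZR_lt; auto).
  assert (c * c * (a * IZR (Z.abs k) / 3 * vnorm G) <= INR N * (a * vnorm w)).
  { eapply Rle_trans. 2: apply E4. apply Rmult_le_compat_l. nra. apply Rmult_le_compat_r; auto. }
  apply Rmult_le_reg_l with (a / 3). apply Rdiv_lt_0_compat; lra.
  replace (a / 3 * (IZR (Z.abs k) * c * c * vnorm G))
    with (c * c * (a * IZR (Z.abs k) / 3 * vnorm G)) by field.
  replace (a / 3 * (3 * INR N * vnorm w)) with (INR N * (a * vnorm w)) by field. auto.
Qed.

Lemma resolvent_coefficient_low k w beta : vnorm w <= beta ->
  vnorm (resolvent_coefficient T N k w) <= INR N * beta / c.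
Proof.
  intros Hw. pose proof Hc as [Hc0 _]. assert (0 < INR N) by (apply lt_0_INR; auto).
  apply Rmult_le_reg_l with c; auto.
  replace (c * (INR N * beta / c)) with (INR N * beta) by (field; lra).
  eapply Rle_trans. apply resolvent_coefficient_bound. apply Rmult_le_compat_l; lra.
Qed.

Lemma resolvent_coefficient_high k w beta (m : nat) : vnorm w <= beta -> (0 < m)%nat ->
  (Z.of_nat m <= Z.abs k)%Z -> (2 * Z.abs k <= Z.of_nat N)%Z ->
  vnorm (resolvent_coefficient T N k w) <= 3 * INR N * beta / (INR m * (c * c)).
Proof.
  intros Hw Hm Hmk HkN. pose proof Hc as [Hc0 _].
  assert (0 < INR m) by (apply lt_0_INR; auto). assert (0 < INR N) by (apply lt_0_INR; auto).
  set (G := resolvent_coefficient T N k w).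
  pose proof (resolvent_coefficient_decay k w ltac:(lia) HkN) as Hgb. fold G in Hgb.
  assert (INR m <= IZR (Z.abs k)) by (rewrite INR_IZR_INZ; apply IZR_le; auto).
  pose proof (vnorm_nonneg G).
  apply Rmult_le_reg_l with (INR m * (c * c)); [apply Rmult_lt_0_compat; nra|].
  replace (INR m * (c * c) * (3 * INR N * beta / (INR m * (c * c))))
    with (3 * INR N * beta) by (field; repeat split; lra).
  apply Rle_trans with (IZR (Z.abs k) * c * c * vnorm G).
  { replace (INR m * (c * c) * vnorm G) with (INR m * (c * c * vnorm G)) by ring.
    replace (IZR (Z.abs k) * c * c * vnorm G) with (IZR (Z.abs k) * (c * c * vnorm G)) by ring.
    apply Rmult_le_compat_r; [nra | auto]. }
  eapply Rle_trans. apply Hgb. apply Rmult_le_compat_l; lra.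
Qed.

End ResolventCoefficients.

(** The windowed Fourier transform [sum_(|k| <= n) e^(-ikt) u_k]. *)
Definition window (n i : nat) : Z := (Z.of_nat i - Z.of_nat n)%Z.

Definition fourier {B : Banach} (n : nat) (t : R) (u : Z -> B) : B :=
  vsum (fun i => cis (- t * IZR (window n i)) *v u (window n i)) (2 * n + 1).

Lemma fourier_defect {B : Banach} (T : B -> B) n t (u : Z -> B) : lin T ->
  (forall k, (Z.of_nat n <= Z.abs k)%Z -> u k = vzero) ->
  minus_scalar T (cis t) (fourier n t u) = -v fourier n t (defect T u).
Proof.
  intros HT Hu0. unfold fourier. rewrite lin_vsum by (apply minus_scalar_lin; auto).
  set (h := fun i => cis (t - t * IZR (window n i)) *v u (window n i)).
  transitivity (vsum (fun i => (h (Datatypes.S i) -v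
    cis (- t * IZR (window n i)) *v defect T u (window n i)) -v h i) (2 * n + 1)).
  { apply vsum_ext. intros i _.
    assert (T (u (window n i)) = u (window n i + 1)%Z -v defect T u (window n i)) as ET
      by (apply vsub_move; reflexivity).
    rewrite lin_scal by (apply minus_scalar_lin; auto). unfold minus_scalar.
    rewrite ET, !vscal_sub. unfold h. rewrite vscal_assoc, Cmul_cis.
    replace (window n (Datatypes.S i)) with (window n i + 1)%Z by (unfold window; lia).
    replace (t - t * IZR (window n i + 1)) with (- t * IZR (window n i)) by (rewrite plus_IZR; ring).
    replace (- t * IZR (window n i) + t) with (t - t * IZR (window n i)) by ring. reflexivity. }
  rewrite !vsum_sub, vsum_shift.
  assert (h O = vzero) as Hh0.
  { unfold h. rewrite (Hu0 (window n O)) by (unfold window; lia). apply vscal_0. }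
  assert (h (2 * n + 1)%nat = vzero) as Hh1.
  { unfold h. rewrite (Hu0 (window n (2 * n + 1))) by (unfold window; lia). apply vscal_0. }
  rewrite Hh0, Hh1, vsub_0r, vadd_0. apply vsub_sub_l.
Qed.

Lemma fourier_inversion {B : Banach} n (u : Z -> B) : (0 < n)%nat ->
  vsum (fun j => fourier n (angle (2 * n) j) u) (2 * n) = RC (INR (2 * n)) *v u 0%Z.
Proof.
  intros Hn. unfold fourier.
  rewrite (vsum_swap (fun j i => cis (- angle (2 * n) j * IZR (window n i)) *v u (window n i))).
  rewrite (vsum_single _ _ n) by (try lia; intros i Hi Hin; apply roots_of_unity_sum;
    unfold window; lia).
  unfold window. rewrite Z.sub_diag.
  transitivity (vsum (fun _ => u 0%Z) (2 * n)).
  - apply vsum_ext. intros. rewrite Rmult_0_r, cis_0, vscal_1. auto.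
  - apply vsum_const.
Qed.

Lemma window_count (n m L : nat) :
  rsum (fun i => if Z_lt_dec (Z.abs (Z.of_nat i - Z.of_nat n)) (Z.of_nat m) then 1 else 0) L
  <= 2 * INR m.
Proof.
  set (g := fun i : nat => Rmin (2 * INR m) (Rmax 0 (INR i - INR n + INR m))).
  apply Rle_trans with (rsum (fun i => g (Datatypes.S i) - g i) L).
  - apply rsum_le. intros i _. unfold g. rewrite S_INR.
    destruct (Z_lt_dec _ _) as [Hl|Hl].
    + assert (1 <= IZR (Z.of_nat i - Z.of_nat n + Z.of_nat m) <= 2 * INR m - 1) as H.
      { rewrite INR_IZR_INZ. split. apply IZR_le; lia.
        replace (2 * IZR (Z.of_nat m) - 1) with (IZR (2 * Z.of_nat m - 1))
          by (rewrite minus_IZR, mult_IZR; simpl; ring).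
        apply IZR_le; lia. }
      rewrite plus_IZR, minus_IZR, <- !INR_IZR_INZ in H.
      unfold Rmin, Rmax. repeat destruct Rle_dec; lra.
    + pose proof (pos_INR m). unfold Rmin, Rmax. repeat destruct Rle_dec; lra.
  - rewrite rsum_telescope. unfold g. pose proof (pos_INR m).
    assert (Rmin (2 * INR m) (Rmax 0 (INR L - INR n + INR m)) <= 2 * INR m) by apply Rmin_l.
    assert (0 <= Rmin (2 * INR m) (Rmax 0 (INR 0 - INR n + INR m))).
    { apply Rmin_glb. lra. apply Rmax_l. }
    lra.
Qed.

Section HyperbolicOrbits.
Context {B : Banach} (T S : B -> B) (HI : inv_pair T S) (HT : lin T).
Context (Hh : hyperbolic T) (c : R) (Hc : bounded_below_on_circle T c).

Lemma damped_orbit_resolvent n z : (0 < n)%nat ->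
  RC (INR (2 * n)) *v z = -v vsum (fun i => resolvent_coefficient T (2 * n) (window n i)
    (defect T (damped_orbit T S n z) (window n i))) (2 * n + 1).
Proof.
  intros Hn. set (u := damped_orbit T S n z). set (e := defect T u).
  rewrite <- (damped_orbit_0 T S n z Hn). fold u.
  rewrite <- (fourier_inversion n u Hn).
  set (N := (2 * n)%nat). assert (HN : (0 < N)%nat) by (unfold N; lia).
  assert (Hj : forall j, (j < N)%nat -> fourier n (angle N j) u =
     -v vsum (fun i => cis (- angle N j * IZR (window n i)) *v
                       resolvent T (angle N j) (e (window n i))) (2 * n + 1)).
  { intros j Hj. destruct (angle_range N j HN Hj) as [R1 _].
    apply (minus_scalar_inj T HT c Hc (angle N j)); auto.
    rewrite fourier_defect by (auto; intros; unfold u; apply damped_orbit_out; auto).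
    rewrite !(lin_opp (minus_scalar T _)), lin_vsum by (apply minus_scalar_lin; auto).
    f_equal. unfold fourier. apply vsum_ext. intros i _.
    rewrite lin_scal, resolvent_spec by (auto; apply minus_scalar_lin; auto). reflexivity. }
  rewrite (vsum_ext _ _ N Hj), vsum_opp. f_equal.
  apply (vsum_swap (fun j i => cis (- angle N j * IZR (window n i)) *v
    resolvent T (angle N j) (e (window n i)))).
Qed.

(** Summing the bounds on the resolvent coefficients of the defect of the
    damped orbit of [z] (whose orbit is bounded by [M]), for [0 < m <= n]:
    the [2m] low frequencies [|k| < m] are bounded by [c1], the others
    decay to at most [c2]. *)
Lemma damped_orbit_coefficients_bound z M n m : (forall k, vnorm (zpow T S k z) <= M) ->
  (0 < m)%nat -> (m <= n)%nat ->
  let c1 := INR (2 * n) * (M / INR n) / c in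
  let c2 := 3 * INR (2 * n) * (M / INR n) / (INR m * (c * c)) in
  INR (2 * n) * vnorm z <= c1 * (2 * INR m) + INR (2 * n + 1) * c2.
Proof.
  intros HM Hm Hmn c1 c2. pose proof Hc as [Hc0 _]. assert (0 < n)%nat as Hn by lia.
  assert (0 < c * c) by nra.
  assert (0 < INR n) by (apply lt_0_INR; auto). assert (0 < INR m) by (apply lt_0_INR; auto).
  assert (0 <= M) as HM0 by (pose proof (HM 0%Z); pose proof (vnorm_nonneg z); simpl in *; lra).
  set (N := (2 * n)%nat) in *. assert (0 < N)%nat as HN by (unfold N; lia).
  assert (0 < INR N) by (apply lt_0_INR; auto).
  set (e := defect T (damped_orbit T S n z)).
  assert (He : forall k, vnorm (e k) <= M / INR n).
  { intros k. apply (damped_orbit_bounds T S HI HT n z M Hn HM0); auto. }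
  set (G := fun i => resolvent_coefficient T N (window n i) (e (window n i))).
  set (ind := fun i : nat => if Z_lt_dec (Z.abs (Z.of_nat i - Z.of_nat n)) (Z.of_nat m) then 1 else 0).
  assert (0 <= M / INR n) by (apply Rmult_le_pos; [|apply Rlt_le, Rinv_0_lt_compat]; lra).
  assert (Low : forall i, vnorm (G i) <= c1).
  { intros i. apply (resolvent_coefficient_low T Hh c Hc N HN), He. }
  assert (High : forall i, (i < 2 * n + 1)%nat -> (Z.of_nat m <= Z.abs (window n i))%Z ->
    vnorm (G i) <= c2).
  { intros i Hi Hl. apply (resolvent_coefficient_high T HT Hh c Hc N HN); auto.
    unfold window, N; lia. }
  assert (HG : forall i, (i < 2 * n + 1)%nat -> vnorm (G i) <= c1 * ind i + c2).
  { intros i Hi. assert (0 <= c1) by (pose proof (vnorm_nonneg (G 0%nat)); pose proof (Low 0%nat); lra).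
    assert (0 <= c2) by (unfold c2; apply Rmult_le_pos; [nra | apply Rlt_le, Rinv_0_lt_compat; nra]).
    unfold ind. destruct (Z_lt_dec _ _) as [Hl|Hl].
    - pose proof (Low i). lra.
    - pose proof (High i Hi ltac:(unfold window; lia)). lra. }
  pose proof (damped_orbit_resolvent n z Hn) as Id.
  change (RC (INR N) *v z = -v vsum G (2 * n + 1)) in Id.
  apply (f_equal vnorm) in Id. rewrite vnorm_RC, vnorm_opp, Rabs_right in Id by (apply Rle_ge, pos_INR).
  pose proof (vsum_norm G (2 * n + 1)) as Hsum. rewrite <- Id in Hsum.
  pose proof (rsum_le _ _ _ HG) as Hr. rewrite rsum_add, rsum_scal, rsum_const in Hr.
  pose proof (window_count n m (2 * n + 1)) as Hcount. fold ind in Hcount.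
  eapply Rle_trans. apply Hsum. eapply Rle_trans. apply Hr.
  apply Rplus_le_compat_r. apply Rmult_le_compat_l; auto.
  pose proof (Low 0%nat). pose proof (vnorm_nonneg (G 0%nat)). lra.
Qed.

Lemma bounded_orbit_estimate z M n m : (forall k, vnorm (zpow T S k z) <= M) ->
  (0 < m)%nat -> (m <= n)%nat ->
  vnorm z <= 2 * INR m * M / (INR n * c) + 9 * M / (INR m * (c * c)).
Proof.
  intros HM Hm Hmn. pose proof Hc as [Hc0 _]. assert (0 < c * c) by nra.
  assert (0 < INR n) by (apply lt_0_INR; lia). assert (0 < INR m) by (apply lt_0_INR; auto).
  assert (0 <= M) as HM0 by (pose proof (HM 0%Z); pose proof (vnorm_nonneg z); simpl in *; lra).
  pose proof (damped_orbit_coefficients_bound z M n m HM Hm Hmn) as Hfin. cbv zeta in Hfin.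
  assert (INR (2 * n) = 2 * INR n) as EN by (rewrite mult_INR; auto).
  assert (INR (2 * n + 1) = 2 * INR n + 1) as EN2 by (rewrite plus_INR, mult_INR; simpl; ring).
  rewrite EN, EN2 in Hfin.
  apply Rmult_le_reg_l with (2 * INR n). lra.
  eapply Rle_trans. apply Hfin.
  assert (0 <= M / (INR m * (c * c)))
    by (apply Rmult_le_pos; auto; apply Rlt_le, Rinv_0_lt_compat, Rmult_lt_0_compat; lra).
  assert ((2 * INR n + 1) * (3 * (2 * INR n) * (M / INR n) / (INR m * (c * c)))
          <= 2 * INR n * (9 * M / (INR m * (c * c)))).
  { replace ((2 * INR n + 1) * (3 * (2 * INR n) * (M / INR n) / (INR m * (c * c))))
      with ((2 * INR n + 1) * 6 * (M / (INR m * (c * c)))) by (field; repeat split; lra).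
    replace (2 * INR n * (9 * M / (INR m * (c * c)))) with (18 * INR n * (M / (INR m * (c * c))))
      by (field; repeat split; lra).
    apply Rmult_le_compat_r; auto. assert (1 <= INR n) by (apply (le_INR 1); lia). lra. }
  assert (2 * INR n * (M / INR n) / c * (2 * INR m) = 2 * INR n * (2 * INR m * M / (INR n * c)))
    by (field; lra).
  lra.
Qed.

(** Letting first [m], then [n / m] go to infinity in the estimate shows
    that only 0 has a bounded orbit. *)
Lemma hyperbolic_no_bounded_orbit : no_bounded_orbit T S.
Proof.
  intros z M HM. pose proof Hc as [Hc0 _].
  apply vnorm_eq0. destruct (Req_dec (vnorm z) 0) as [|Hz]; auto. exfalso.
  pose proof (vnorm_nonneg z). assert (0 < vnorm z) by lra.
  assert (vnorm z <= M) by apply (HM 0%Z).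
  assert (0 < c * c) by nra.
  destruct (archi_nat (18 * M / (c * c * vnorm z))) as [m [Hm Hmb]].
  destruct (archi_nat (INR m + 4 * INR m * M / (c * vnorm z))) as [n [Hn Hnb]].
  assert (0 < INR m) by (apply lt_0_INR; auto).
  assert (0 < INR n) by (apply lt_0_INR; auto).
  assert (0 <= 4 * INR m * M / (c * vnorm z)).
  { apply Rmult_le_pos. nra. apply Rlt_le, Rinv_0_lt_compat. nra. }
  assert (m <= n)%nat as Hmn by (apply INR_le; lra).
  pose proof (bounded_orbit_estimate z M n m HM Hm Hmn) as Hk.
  assert (9 * M / (INR m * (c * c)) < vnorm z / 2).
  { apply Rmult_lt_reg_l with (INR m * (c * c)). nra.
    replace (INR m * (c * c) * (9 * M / (INR m * (c * c)))) with (9 * M) by (field; split; lra).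
    apply Rmult_lt_compat_r with (r := c * c * vnorm z) in Hmb; [|nra].
    replace (18 * M / (c * c * vnorm z) * (c * c * vnorm z)) with (18 * M) in Hmb by (field; split; lra).
    nra. }
  assert (2 * INR m * M / (INR n * c) < vnorm z / 2).
  { apply Rmult_lt_reg_l with (INR n * c). nra.
    replace (INR n * c * (2 * INR m * M / (INR n * c))) with (2 * INR m * M) by (field; split; lra).
    assert (4 * INR m * M / (c * vnorm z) < INR n) as H7 by lra.
    apply Rmult_lt_compat_r with (r := c * vnorm z) in H7; [|nra].
    replace (4 * INR m * M / (c * vnorm z) * (c * vnorm z)) with (4 * INR m * M) in H7 by (field; split; lra).
    nra. }
  lra.
Qed.

End HyperbolicOrbits.

(** Hyperbolicity gives the uniform lower bound needed above. *)
Lemma hyperbolic_expansive {B : Banach} (T S : B -> B) :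
  inv_pair T S -> lin T -> lin S -> hyperbolic T -> expansive T S.
Proof.
  intros HI HT HS Hh. destruct (hyperbolic_bounded_below T Hh) as [c Hc].
  apply expansive_iff_no_bounded_orbit; auto.
  apply (hyperbolic_no_bounded_orbit T S HI HT Hh c Hc).
Qed.

Theorem mainTheorem15 (B : Banach) (T S : B -> B) :
  is_aut_with_inverse T S ->
  shadowing T S ->
  (uniformly_expansive T S <-> expansive T S) /\
  (expansive T S <-> unique_shadowing T S) /\
  (unique_shadowing T S <-> hyperbolic T).
Proof.
  intros Haut Hsh. destruct (aut_structure T S Haut) as [HI [HT [HS HMT]]].
  assert (Hus : expansive T S <-> unique_shadowing T S).
  { split; [apply expansive_unique_shadowing | apply unique_shadowing_expansive]; auto. }
  assert (Hhyp : expansive T S <-> hyperbolic T).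
  { split; [apply expansive_hyperbolic | apply hyperbolic_expansive]; auto. }
  split; [|split].
  - split; [apply uniformly_expansive_expansive | intros; apply expansive_uniformly_expansive]; auto.
  - exact Hus.
  - rewrite <- Hus. exact Hhyp.
Qed.
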